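(* For $\lambda=(\sigma,b,r)\in(0,\infty)^3$ let $\mathscr A_\lambda\subseteq\mathbb R^3$ be the global attractor of the semigroup generated by the Lorenz system $x'=-\sigma x+\sigma y$, $y'=rx-y-xz$, $z'=-bz+xy$. There is a residual and dense subset $\Lambda_*\subseteq(0,\infty)^3$ such that the map $(0,\infty)^3\to CB(\mathbb R^3)$, $\lambda\mapsto\mathscr A_\lambda$, is continuous at every $\lambda\in\Lambda_*$.
   Context: For each $\lambda\in(0,\infty)^3$ the Lorenz system generates a semigroup $S_\lambda(t)$ on $\mathbb R^3$ possessing a global attractor, i.e. a compact invariant set attracting every bounded set. $CB(\mathbb R^3)$ is the space of nonempty closed bounded subsets of $\mathbb R^3$ with the Hausdorff metric $\Delta(A,C)=\max(\sup_{a\in A}\inf_{c\in C}|a-c|,\sup_{c\in C}\inf_{a\in A}|a-c|)$. A set is residual if its complement is a countable union of nowhere dense sets. *)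

From Stdlib Require Import Reals Lra.
From Coquelicot Require Import Coquelicot.
Open Scope R_scope.

(* Points of R^3 (and parameters lambda = (sigma, b, r)) as ((x, y), z). *)
Definition vec := (R * R * R)%type.
Definition vx (p : vec) : R := fst (fst p).
Definition vy (p : vec) : R := snd (fst p).
Definition vz (p : vec) : R := snd p.

Definition edist (p q : vec) : R :=
  sqrt ((vx p - vx q)^2 + (vy p - vy q)^2 + (vz p - vz q)^2).

Definition posoct (l : vec) : Prop := 0 < vx l /\ 0 < vy l /\ 0 < vz l.

Definition lorenz_solution (l : vec) (u : R -> vec) : Prop :=
  let sigma := vx l in let b := vy l in let r := vz l in
  (forall t, 0 < t ->
     is_derive (fun s => vx (u s)) t (- sigma * vx (u t) + sigma * vy (u t)) /\
     is_derive (fun s => vy (u s)) t (r * vx (u t) - vy (u t) - vx (u t) * vz (u t)) /\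
     is_derive (fun s => vz (u s)) t (- b * vz (u t) + vx (u t) * vy (u t))) /\
  filterlim (fun s => vx (u s)) (at_right 0) (locally (vx (u 0))) /\
  filterlim (fun s => vy (u s)) (at_right 0) (locally (vy (u 0))) /\
  filterlim (fun s => vz (u s)) (at_right 0) (locally (vz (u 0))).

Definition lorenz_S (l : vec) (t : R) (x y : vec) : Prop :=
  exists u, lorenz_solution l u /\ u 0 = x /\ u t = y.

Definition bounded3 (B : vec -> Prop) : Prop :=
  exists M, forall p, B p -> edist p (0, 0, 0) <= M.

Definition closed3 (A : vec -> Prop) : Prop :=
  forall p, (forall eps, 0 < eps -> exists a, A a /\ edist p a < eps) -> A p.

(* Compact subsets of R^3 (Heine-Borel: closed and bounded). *)
Definition compact3 (A : vec -> Prop) : Prop := closed3 A /\ bounded3 A.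

Definition is_global_attractor (l : vec) (A : vec -> Prop) : Prop :=
  compact3 A /\
  (forall t, 0 <= t -> forall y, A y <-> exists x, A x /\ lorenz_S l t x y) /\
  (forall B, bounded3 B -> forall eps, 0 < eps -> exists T, forall t, T <= t ->
     forall x y, B x -> lorenz_S l t x y -> exists a, A a /\ edist y a < eps).

Definition point_set_dist (a : vec) (C : vec -> Prop) : Rbar :=
  Glb_Rbar (fun s => exists c, C c /\ s = edist a c).
Definition excess (A C : vec -> Prop) : Rbar :=
  Lub_Rbar (fun s => exists a, A a /\ Finite s = point_set_dist a C).
Definition hausdorff_dist (A C : vec -> Prop) : Rbar :=
  let e1 := excess A C in let e2 := excess C A in
  if Rbar_lt_dec e1 e2 then e2 else e1.

Definition nowhere_dense_in (X N : vec -> Prop) : Prop :=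
  forall p, X p -> forall eps, 0 < eps ->
    exists q delta, X q /\ 0 < delta /\
      (forall z, X z -> edist q z < delta -> edist p z < eps) /\
      (forall z, X z -> edist q z < delta -> ~ N z).

Definition dense_in (X L : vec -> Prop) : Prop :=
  forall p, X p -> forall eps, 0 < eps -> exists q, L q /\ edist p q < eps.

Definition residual_in (X L : vec -> Prop) : Prop :=
  exists N : nat -> vec -> Prop,
    (forall n, nowhere_dense_in X (N n)) /\
    (forall p, X p -> ~ L p -> exists n, N n p).

(* Upper semicontinuity: a point of [A_mu] is [S_mu(t) x] with [x] in [A_mu]. The Lyapunov function
   [V = r x^2 + sigma y^2 + sigma (z - 2r)^2] puts the attractors for all [mu] near [lambda] in a
   common ball and keeps the trajectories from it in a larger one, so by Gronwall [S_mu(t) x] is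
   close to [S_lambda(t) x], which for large [t] is close to [A_lambda] since [A_lambda] attracts
   bounded sets. Using attraction at [lambda] needs solutions to exist: they come from Picard
   iteration for the field clamped to a box which, by the same Lyapunov bound, is never left.

   Generic continuity: by upper semicontinuity, for a grid point [q] and a radius [c] the set of
   parameters with [dist(q, A_lambda) <= c] is relatively closed, so its frontier is nowhere dense.
   Off these countably many frontiers the map is also lower semicontinuous; their complement is
   residual by construction and dense by the Baire category theorem. *)

From Stdlib Require Import Reals Lra Psatz Classical ClassicalEpsilon ZArith Cantor.
From Coquelicot Require Import Coquelicot.
Open Scope R_scope.

(** * One-variable calculus *)

Lemma is_derive_continuity_pt (g : R -> R) t d : is_derive g t d -> continuity_pt g t.
Proof.
  intros H. apply continuity_pt_filterlim, (ex_derive_continuous (V:=R_NormedModule)).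
  exists d; exact H.
Qed.

Lemma continuity_pt_ball (g : R -> R) s e : continuity_pt g s -> 0 < e ->
  exists eta, 0 < eta /\ forall u, Rabs (u - s) < eta -> Rabs (g u - g s) < e.
Proof.
  intros Hc He. apply continuity_pt_locally with (eps := mkposreal e He) in Hc.
  destruct Hc as [eta Heta]. exists eta. split; [apply cond_pos|].
  intros u Hu. apply Heta. exact Hu.
Qed.

Lemma continuity_pt_from_ball (f : R -> R) s :
  (forall e, 0 < e -> exists d, 0 < d /\ forall u, Rabs (u - s) < d -> Rabs (f u - f s) < e) ->
  continuity_pt f s.
Proof.
  intros H. apply continuity_pt_locally. intros eps.
  destruct (H eps (cond_pos eps)) as [d [Hd Hu]].
  exists (mkposreal d Hd). intros y Hy. apply Hu. exact Hy.
Qed.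

Lemma continuity_pt_nonexpanding (f : R -> R) s :
  (forall a b, Rabs (f a - f b) <= Rabs (a - b)) -> continuity_pt f s.
Proof.
  intros H. apply continuity_pt_from_ball. intros e He. exists e. split; [lra|].
  intros u Hu. eapply Rle_lt_trans; [apply H|exact Hu].
Qed.

Lemma increment_le_of_derive_le (g dg : R -> R) (a b k : R) : a < b ->
  (forall t, a < t < b -> is_derive g t (dg t) /\ dg t <= k) ->
  (forall t, a <= t <= b -> continuity_pt g t) -> g b - g a <= k * (b - a).
Proof.
  intros Hab Hd Hc.
  (* [MVT_gen] wants a derivative on the closed interval; its value at the ends is irrelevant. *)
  set (df := fun x => if Rlt_dec a x then if Rlt_dec x b then dg x else k else k).
  destruct (MVT_gen g a b df) as [c [Hc1 Hc2]].
  - intros x Hx. rewrite Rmin_left, Rmax_right in Hx by lra.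
    unfold df. destruct (Rlt_dec a x); [|lra]. destruct (Rlt_dec x b); [|lra].
    apply Hd; lra.
  - intros x Hx. rewrite Rmin_left, Rmax_right in Hx by lra. apply Hc; lra.
  - rewrite Hc2. rewrite Rmin_left, Rmax_right in Hc1 by lra.
    apply Rmult_le_compat_r; [lra|]. unfold df.
    destruct (Rlt_dec a c); [|lra]. destruct (Rlt_dec c b); [|lra]. apply Hd; lra.
Qed.

Lemma last_time_below (g : R -> R) (W t : R) : 0 < t ->
  (forall s, 0 <= s <= t -> continuity_pt g s) ->
  exists s0, 0 <= s0 <= t /\ (s0 = 0 \/ g s0 <= W) /\ (forall s, s0 < s <= t -> W < g s).
Proof.
  intros Ht Hc.
  set (E := fun s => 0 <= s <= t /\ (s = 0 \/ g s <= W)).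
  destruct (completeness E) as [s0 [Hub Hlub]].
  { exists t. intros s [Hs _]. lra. }
  { exists 0. split; [lra|left; reflexivity]. }
  assert (Hs0 : 0 <= s0 <= t).
  { split; [apply Hub; split; [lra|left; reflexivity]|].
    apply Hlub. intros s [Hs _]. lra. }
  exists s0. split; [exact Hs0|]. split.
  - destruct (Req_dec s0 0) as [Hz|Hnz]; [left; exact Hz|right].
    apply Rnot_lt_le. intros Hgt.
    destruct (continuity_pt_ball g s0 (g s0 - W) (Hc s0 Hs0)) as [eta [Heta Hn]]; [lra|].
    set (eta' := Rmin eta s0).
    assert (Heta' : 0 < eta' <= eta /\ eta' <= s0)
      by (unfold eta'; repeat split; [apply Rmin_glb_lt; lra|apply Rmin_l|apply Rmin_r]).
    assert (Hub' : forall s, E s -> s <= s0 - eta').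
    { intros s Es. apply Rnot_lt_le. intros Hs.
      assert (s <= s0) by (apply Hub; exact Es).
      destruct Es as [_ [->|Es]]; [lra|].
      assert (Hab : Rabs (s - s0) < eta) by (rewrite Rabs_left1; lra).
      specialize (Hn s Hab). rewrite Rabs_lt_between in Hn. lra. }
    specialize (Hlub (s0 - eta') Hub'). lra.
  - intros s Hs. apply Rnot_le_lt. intros Hle.
    assert (s <= s0) by (apply Hub; split; [lra|right; exact Hle]). lra.
Qed.

Lemma continuity_pt_on_ray (g dg : R -> R) :
  (forall t, 0 < t -> is_derive g t (dg t)) -> continuity_pt g 0 ->
  forall s, 0 <= s -> continuity_pt g s.
Proof.
  intros Hd Hc0 s Hs. destruct (Req_dec s 0) as [->|]; [exact Hc0|].
  apply (is_derive_continuity_pt g s (dg s)), Hd. lra.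
Qed.

Lemma sublevel_forward_invariant (g dg : R -> R) (W W' : R) :
  (forall t, 0 < t -> is_derive g t (dg t)) -> continuity_pt g 0 ->
  (forall t, 0 < t -> W <= g t <= W' -> dg t <= 0) ->
  g 0 <= W -> W < W' -> forall t, 0 <= t -> g t <= W.
Proof.
  intros Hd Hc0 Hdg H0 HW t Ht.
  assert (Hc := continuity_pt_on_ray g dg Hd Hc0).
  destruct (Req_dec t 0) as [->|Ht0]; [exact H0|].
  apply Rnot_lt_le. intros Hgt.
  destruct (last_time_below g W t) as [s0 [Hs0 [Hgs0 Hafter]]]; [lra|intros; apply Hc; lra|].
  assert (Hgs0' : g s0 <= W) by (destruct Hgs0 as [->|]; lra).
  assert (s0 < t) by (destruct (Req_dec s0 t) as [->|]; lra).
  (* Just after [s0] the value is still below [W'], where [g] cannot increase. *)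
  destruct (continuity_pt_ball g s0 (W' - W) (Hc s0 (proj1 Hs0))) as [eta [Heta Hn]]; [lra|].
  set (t2 := Rmin t (s0 + eta/2)).
  assert (Ht2 : s0 < t2 <= t) by (unfold t2; split; [apply Rmin_glb_lt; lra|apply Rmin_l]).
  assert (Ht2' : t2 <= s0 + eta / 2) by apply Rmin_r.
  assert (g t2 - g s0 <= 0 * (t2 - s0)).
  { apply (increment_le_of_derive_le g dg); [lra| |intros; apply Hc; lra].
    intros u Hu. split; [apply Hd; lra|]. apply Hdg; [lra|]. split; [left; apply Hafter; lra|].
    assert (Hue : Rabs (u - s0) < eta) by (rewrite Rabs_right; lra).
    specialize (Hn u Hue). rewrite Rabs_lt_between in Hn. lra. }
  specialize (Hafter t2 Ht2). lra.
Qed.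

Lemma descent_to_level (g dg : R -> R) (W d : R) : 0 <= d ->
  (forall t, 0 < t -> is_derive g t (dg t)) -> continuity_pt g 0 ->
  (forall t, 0 < t -> W <= g t -> dg t <= - d) ->
  forall t, 0 <= t -> g t <= Rmax W (g 0 - d * t).
Proof.
  intros Hd0 Hd Hc0 Hdg t Ht.
  assert (Hc := continuity_pt_on_ray g dg Hd Hc0).
  destruct (Req_dec t 0) as [->|Ht0]; [rewrite Rmult_0_r, Rminus_0_r; apply Rmax_r|].
  destruct (last_time_below g W t) as [s0 [Hs0 [Hgs0 Hafter]]]; [lra|intros; apply Hc; lra|].
  destruct (Req_dec s0 t) as [->|Hne].
  { destruct Hgs0 as [|Hle]; [lra|]. eapply Rle_trans; [exact Hle|apply Rmax_l]. }
  assert (g t - g s0 <= - d * (t - s0)).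
  { apply (increment_le_of_derive_le g dg); [lra| |intros; apply Hc; lra].
    intros u Hu. split; [apply Hd; lra|]. apply Hdg; [lra|]. left; apply Hafter; lra. }
  destruct Hgs0 as [->|Hle].
  - eapply Rle_trans; [|apply Rmax_r]. lra.
  - eapply Rle_trans; [|apply Rmax_l]. nra.
Qed.

Lemma gronwall_from_zero (g dg : R -> R) (K B : R) : 0 < K -> 0 <= B ->
  (forall t, 0 < t -> is_derive g t (dg t) /\ dg t <= K * g t + B) ->
  continuity_pt g 0 -> g 0 = 0 -> forall t, 0 <= t -> g t <= B / K * (exp (K * t) - 1).
Proof.
  intros HK HB Hd Hc0 H0 t Ht.
  (* [(g + B/K) e^{-Kt}] is nonincreasing. *)
  set (h := fun s => (g s + B / K) * exp (- K * s)).
  set (dh := fun s => (dg s - K * g s - B) * exp (- K * s)).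
  assert (Hdh : forall s, 0 < s -> is_derive h s (dh s)).
  { intros s Hs. unfold h, dh.
    evar (l : R). replace ((dg s - K * g s - B) * exp (- K * s)) with l.
    - apply (is_derive_mult (fun s => g s + B / K) (fun s => exp (- K * s))).
      + apply (is_derive_plus g (fun _ => B / K)); [apply Hd; lra|apply is_derive_const].
      + apply (is_derive_comp exp (fun s => - K * s)); [apply is_derive_exp|].
        apply (is_derive_scal (fun s => s)), is_derive_id.
      + intros; apply Rmult_comm.
    - unfold l. simpl. unfold plus, mult, scal, zero, one; simpl. unfold mult; simpl. field. lra. }
  assert (Hch0 : continuity_pt h 0).
  { unfold h. apply continuity_pt_mult.
    - apply continuity_pt_plus; [exact Hc0|]. apply continuity_pt_const; intros ? ?; reflexivity.
    - apply continuity_pt_comp with (f1 := fun s => - K * s).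
      + apply continuity_pt_scal, continuity_pt_id.
      + apply derivable_continuous_pt, derivable_pt_exp. }
  destruct (Req_dec t 0) as [->|Ht0]; [rewrite H0, Rmult_0_r, exp_0; lra|].
  assert (Hmono : h t - h 0 <= 0 * (t - 0)).
  { apply (increment_le_of_derive_le h dh); [lra| |].
    - intros u Hu. split; [apply Hdh; lra|].
      unfold dh. destruct (Hd u (proj1 Hu)) as [_ Hle].
      assert (0 < exp (- K * u)) by apply exp_pos. nra.
    - intros; apply (continuity_pt_on_ray h dh Hdh Hch0); lra. }
  unfold h in Hmono. rewrite H0, Rmult_0_r, exp_0 in Hmono.
  assert (Hexp : exp (- K * t) * exp (K * t) = 1)
    by (rewrite <- exp_plus; replace (- K * t + K * t) with 0 by ring; apply exp_0).
  assert (0 < exp (K * t)) by apply exp_pos.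
  assert (Hm : (g t + B / K) * exp (- K * t) * exp (K*t) <= B / K * exp (K*t))
    by (apply Rmult_le_compat_r; lra).
  rewrite Rmult_assoc, Hexp in Hm. lra.
Qed.

(** * Distances on R^3 *)

Definition l1_dist (p q : vec) := Rabs (vx p - vx q) + Rabs (vy p - vy q) + Rabs (vz p - vz q).

Lemma l1_dist_triangle p q r : l1_dist p r <= l1_dist p q + l1_dist q r.
Proof.
  unfold l1_dist.
  pose proof (Rabs_triang (vx p - vx q) (vx q - vx r)).
  pose proof (Rabs_triang (vy p - vy q) (vy q - vy r)).
  pose proof (Rabs_triang (vz p - vz q) (vz q - vz r)).
  replace (vx p - vx r) with (vx p - vx q + (vx q - vx r)) by ring.
  replace (vy p - vy r) with (vy p - vy q + (vy q - vy r)) by ring.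
  replace (vz p - vz r) with (vz p - vz q + (vz q - vz r)) by ring. lra.
Qed.

Lemma l1_dist_ge_coords p q :
  Rabs (vx p - vx q) <= l1_dist p q /\ Rabs (vy p - vy q) <= l1_dist p q /\
  Rabs (vz p - vz q) <= l1_dist p q.
Proof.
  unfold l1_dist. pose proof (Rabs_pos (vx p - vx q)). pose proof (Rabs_pos (vy p - vy q)).
  pose proof (Rabs_pos (vz p - vz q)). lra.
Qed.

Lemma l1_dist_nonneg p q : 0 <= l1_dist p q.
Proof.
  unfold l1_dist. pose proof (Rabs_pos (vx p - vx q)). pose proof (Rabs_pos (vy p - vy q)).
  pose proof (Rabs_pos (vz p - vz q)). lra.
Qed.

Lemma l1_dist_sym p q : l1_dist p q = l1_dist q p.
Proof.
  unfold l1_dist.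
  rewrite (Rabs_minus_sym (vx p)), (Rabs_minus_sym (vy p)), (Rabs_minus_sym (vz p)). reflexivity.
Qed.

Lemma l1_dist_refl p : l1_dist p p = 0.
Proof. unfold l1_dist. rewrite !Rminus_diag, Rabs_R0. ring. Qed.

Definition sq_dist (p q : vec) := (vx p - vx q)^2 + (vy p - vy q)^2 + (vz p - vz q)^2.

Lemma sq_dist_nonneg p q : 0 <= sq_dist p q.
Proof.
  unfold sq_dist. pose proof (pow2_ge_0 (vx p - vx q)). pose proof (pow2_ge_0 (vy p - vy q)).
  pose proof (pow2_ge_0 (vz p - vz q)). lra.
Qed.

Lemma edist_nonneg p q : 0 <= edist p q.
Proof. apply sqrt_pos. Qed.

Lemma edist_pow2 p q : (edist p q)^2 = sq_dist p q.
Proof.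
  change (edist p q) with (sqrt (sq_dist p q)). simpl. rewrite Rmult_1_r.
  apply sqrt_sqrt, sq_dist_nonneg.
Qed.

Lemma edist_refl p : edist p p = 0.
Proof. unfold edist. rewrite !Rminus_diag. simpl. rewrite !Rmult_0_l, !Rplus_0_l. apply sqrt_0. Qed.

Lemma edist_sym p q : edist p q = edist q p.
Proof. unfold edist. f_equal. ring. Qed.

Lemma edist_ge_coords p q :
  Rabs (vx p - vx q) <= edist p q /\ Rabs (vy p - vy q) <= edist p q /\
  Rabs (vz p - vz q) <= edist p q.
Proof.
  unfold edist. set (a := vx p - vx q). set (b := vy p - vy q). set (c := vz p - vz q).
  assert (H : forall w, w^2 <= a^2 + b^2 + c^2 -> Rabs w <= sqrt (a^2 + b^2 + c^2)).
  { intros w Hw. rewrite <- sqrt_Rsqr_abs. apply sqrt_le_1_alt. unfold Rsqr. simpl in Hw. lra. }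
  pose proof (pow2_ge_0 a); pose proof (pow2_ge_0 b); pose proof (pow2_ge_0 c).
  split; [|split]; apply H; lra.
Qed.

Lemma edist_le_l1_dist p q : edist p q <= l1_dist p q.
Proof.
  unfold edist, l1_dist. set (a := vx p - vx q). set (b := vy p - vy q). set (c := vz p - vz q).
  pose proof (Rabs_pos a); pose proof (Rabs_pos b); pose proof (Rabs_pos c).
  rewrite <- (sqrt_pow2 (Rabs a + Rabs b + Rabs c)) by lra. apply sqrt_le_1_alt.
  rewrite <- (pow2_abs a), <- (pow2_abs b), <- (pow2_abs c). nra.
Qed.

Lemma edist_triangle p q r : edist p r <= edist p q + edist q r.
Proof.
  pose proof (edist_nonneg p q). pose proof (edist_nonneg q r). pose proof (edist_nonneg p r).
  apply Rsqr_incr_0_var; [|lra]. unfold Rsqr.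
  assert (Hpr := edist_pow2 p r). assert (Hpq := edist_pow2 p q). assert (Hqr := edist_pow2 q r).
  simpl in Hpr, Hpq, Hqr. rewrite Rmult_1_r in Hpr, Hpq, Hqr. rewrite Hpr. unfold sq_dist in *.
  set (a1 := vx p - vx q) in *. set (a2 := vy p - vy q) in *. set (a3 := vz p - vz q) in *.
  set (b1 := vx q - vx r) in *. set (b2 := vy q - vy r) in *. set (b3 := vz q - vz r) in *.
  replace (vx p - vx r) with (a1 + b1) by (unfold a1, b1; ring).
  replace (vy p - vy r) with (a2 + b2) by (unfold a2, b2; ring).
  replace (vz p - vz r) with (a3 + b3) by (unfold a3, b3; ring).
  set (d1 := edist p q) in *. set (d2 := edist q r) in *.
  assert (Cauchy_Schwarz : a1 * b1 + a2 * b2 + a3 * b3 <= d1 * d2).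
  { destruct (Rle_dec (a1 * b1 + a2 * b2 + a3 * b3) 0) as [h|h]; [nra|].
    apply Rsqr_incr_0_var; [|nra]. unfold Rsqr.
    replace (d1 * d2 * (d1 * d2)) with ((d1 * d1) * (d2 * d2)) by ring. rewrite Hpq, Hqr.
    pose proof (pow2_ge_0 (a1*b2 - a2*b1)); pose proof (pow2_ge_0 (a1*b3 - a3*b1));
      pose proof (pow2_ge_0 (a2*b3 - a3*b2)).
    nra. }
  simpl. nra.
Qed.

Definition in_cube (K : R) (p : vec) : Prop :=
  Rabs (vx p) <= K /\ Rabs (vy p) <= K /\ Rabs (vz p) <= K.

Lemma in_cube_of_edist_0 K p : edist p (0, 0, 0) <= K -> in_cube K p.
Proof.
  intros H. destruct (edist_ge_coords p (0, 0, 0)) as [c1 [c2 c3]].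
  cbn [vx vy vz fst snd] in c1, c2, c3. rewrite Rminus_0_r in c1, c2, c3.
  unfold in_cube. lra.
Qed.

Lemma bounded3_in_cube K : bounded3 (in_cube K).
Proof.
  exists (3 * K). intros p [c1 [c2 c3]].
  eapply Rle_trans; [apply edist_le_l1_dist|]. unfold l1_dist. cbn [vx vy vz fst snd].
  rewrite !Rminus_0_r. lra.
Qed.

(** * Picard iteration for Lipschitz systems *)

Definition continuity_pt3 (p : R -> vec) (s : R) : Prop :=
  continuity_pt (fun t => vx (p t)) s /\ continuity_pt (fun t => vy (p t)) s /\
  continuity_pt (fun t => vz (p t)) s.

Definition lipschitz (g : vec -> R) (L : R) : Prop :=
  forall p q, Rabs (g p - g q) <= L * l1_dist p q.

Lemma lipschitz_continuity_pt (g : vec -> R) L (p : R -> vec) s : 0 < L -> lipschitz g L ->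
  continuity_pt3 p s -> continuity_pt (fun t => g (p t)) s.
Proof.
  intros HL Hg [H1 [H2 H3]]. apply continuity_pt_from_ball. intros e He.
  assert (He' : 0 < e / (3 * L)) by (apply Rdiv_lt_0_compat; lra).
  destruct (continuity_pt_ball _ s _ H1 He') as [d1 [Hd1 K1]].
  destruct (continuity_pt_ball _ s _ H2 He') as [d2 [Hd2 K2]].
  destruct (continuity_pt_ball _ s _ H3 He') as [d3 [Hd3 K3]].
  exists (Rmin d1 (Rmin d2 d3)). split; [repeat apply Rmin_glb_lt; lra|].
  intros u Hu.
  pose proof (Rmin_l d1 (Rmin d2 d3)). pose proof (Rmin_r d1 (Rmin d2 d3)).
  pose proof (Rmin_l d2 d3). pose proof (Rmin_r d2 d3).
  specialize (K1 u ltac:(lra)). specialize (K2 u ltac:(lra)). specialize (K3 u ltac:(lra)).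
  eapply Rle_lt_trans; [apply Hg|]. unfold l1_dist.
  replace e with (L * (3 * (e / (3 * L)))) by (field; lra).
  apply Rmult_lt_compat_l; lra.
Qed.

Lemma ex_RInt_of_continuous (f : R -> R) a b : (forall s, continuity_pt f s) -> ex_RInt f a b.
Proof.
  intros Hf. apply (ex_RInt_continuous (V:=R_CompleteNormedModule)).
  intros z _. apply continuity_pt_filterlim, Hf.
Qed.

Lemma is_derive_RInt_0 c (f : R -> R) : (forall s, continuity_pt f s) ->
  forall t, is_derive (fun t => c + RInt f 0 t) t (f t).
Proof.
  intros Hf t. evar (l : R). replace (f t) with l.
  - apply (is_derive_plus (fun _ => c) (fun t => RInt f 0 t)); [apply is_derive_const|].
    apply (is_derive_RInt f (fun t => RInt f 0 t) 0 t).
    + apply filter_forall. intros b. apply (RInt_correct (V:=R_CompleteNormedModule)).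
      apply ex_RInt_of_continuous, Hf.
    + apply continuity_pt_filterlim, Hf.
  - unfold l, plus, zero; simpl. ring.
Qed.

Lemma continuity_pt_RInt_0 c (f : R -> R) : (forall s, continuity_pt f s) ->
  forall t, continuity_pt (fun t => c + RInt f 0 t) t.
Proof. intros Hf t. apply (is_derive_continuity_pt _ t (f t)), is_derive_RInt_0, Hf. Qed.

Lemma RInt_scal_pow c n t : RInt (fun s => c * s^(S n)) 0 t = c * t^(S (S n)) / INR (S (S n)).
Proof.
  assert (Hn : INR (S n) + 1 <> 0) by (pose proof (pos_INR (S n)); lra).
  apply is_RInt_unique.
  evar (l : R). replace (c * t ^ S (S n) / INR (S (S n))) with l.
  - apply (is_RInt_derive (fun s => c * s^(S (S n)) / INR (S (S n)))).
    + intros s _. auto_derive; [trivial|].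
      change (match n with | 0%nat => 1 | S _ => INR n + 1 end) with (INR (S n)).
      simpl pow. field. exact Hn.
    + intros s _. apply continuity_pt_filterlim.
      apply (continuity_pt_mult (fun _ => c) (fun s => s^(S n))).
      * apply continuity_pt_const; intros ? ?; reflexivity.
      * apply derivable_continuous_pt, derivable_pt_pow.
  - unfold l, minus, plus, opp; simpl. field.
    change (match n with | 0%nat => 1 | S _ => INR n + 1 end) with (INR (S n)). exact Hn.
Qed.

Lemma RInt_minus_of_continuous (f1 f2 : R -> R) t :
  (forall s, continuity_pt f1 s) -> (forall s, continuity_pt f2 s) ->
  RInt f1 0 t - RInt f2 0 t = RInt (fun s => f1 s - f2 s) 0 t.
Proof.
  intros H1 H2. symmetry.
  assert (E := RInt_minus (V:=R_CompleteNormedModule) f1 f2 0 t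
                 (ex_RInt_of_continuous f1 0 t H1) (ex_RInt_of_continuous f2 0 t H2)).
  unfold minus, plus, opp in E; simpl in E. exact E.
Qed.

Lemma abs_RInt_le_RInt (h g : R -> R) t : 0 <= t ->
  (forall s, continuity_pt h s) -> (forall s, continuity_pt g s) ->
  (forall s, 0 <= s <= t -> Rabs (h s) <= g s) -> Rabs (RInt h 0 t) <= RInt g 0 t.
Proof.
  intros Ht Hh Hg Hb.
  assert (Ha : forall s, continuity_pt (fun s => Rabs (h s)) s)
    by (intros s; apply (continuity_pt_comp h Rabs); [apply Hh|apply Rcontinuity_abs]).
  eapply Rle_trans; [apply abs_RInt_le; [exact Ht|apply ex_RInt_of_continuous, Hh]|].
  apply RInt_le; [exact Ht|apply ex_RInt_of_continuous, Ha|apply ex_RInt_of_continuous, Hg|].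
  intros s Hs. apply Hb. lra.
Qed.

Definition exp_partial_sum (X : R) (N : nat) :=
  sum_f_R0 (fun i => / INR (Factorial.fact i) * X^i) N.

Lemma exp_partial_sum_cv X : Un_cv (exp_partial_sum X) (exp X).
Proof. unfold exp, exp_partial_sum. destruct (exist_exp X) as [l Hl]. simpl. exact Hl. Qed.

Lemma scaled_tail_small (E : nat -> R) e c : 0 <= c -> Un_cv E e ->
  forall eps, 0 < eps -> exists N, forall n, (N <= n)%nat -> c * Rabs (E n - e) < eps.
Proof.
  intros Hc HE eps He. destruct (HE (eps / (c + 1))) as [N HN]; [apply Rdiv_lt_0_compat; lra|].
  exists N. intros n Hn. specialize (HN n Hn). unfold Rdist in HN.
  assert (c * Rabs (E n - e) <= c * (eps / (c + 1))) by (apply Rmult_le_compat_l; lra).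
  assert (c * (eps / (c + 1)) < eps).
  { replace (c * (eps / (c + 1))) with (eps - eps / (c + 1)) by (field; lra).
    assert (0 < eps / (c + 1)) by (apply Rdiv_lt_0_compat; lra). lra. }
  lra.
Qed.

Lemma exp_tail_small X c : 0 <= c ->
  forall eps, 0 < eps -> exists N, forall n, (N <= n)%nat -> c * (exp X - exp_partial_sum X n) < eps.
Proof.
  intros Hc eps He. destruct (scaled_tail_small _ _ c Hc (exp_partial_sum_cv X) eps He) as [N HN].
  exists N. intros n Hn. specialize (HN n Hn). rewrite Rabs_minus_sym in HN.
  assert (c * (exp X - exp_partial_sum X n) <= c * Rabs (exp X - exp_partial_sum X n))
    by (apply Rmult_le_compat_l; [lra|apply Rle_abs]).
  lra.
Qed.

Lemma dominated_increments_cv (u E : nat -> R) c e : 0 <= c -> Un_cv E e ->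
  (forall n j, Rabs (u (n + j)%nat - u n) <= c * (E (n + j)%nat - E n)) ->
  exists l, Un_cv u l /\ forall n, Rabs (l - u n) <= c * (e - E n).
Proof.
  intros Hc HE Hu.
  assert (Hcau : ex_lim_seq_cauchy u).
  { intros eps.
    destruct (scaled_tail_small E e c Hc HE (eps / 2)) as [N HN]; [pose proof (cond_pos eps); lra|].
    exists N.
    assert (H : forall a b, (N <= a)%nat -> (a <= b)%nat -> Rabs (u b - u a) < eps).
    { intros a b Ha Hb. replace b with (a + (b - a))%nat by lia.
      eapply Rle_lt_trans; [apply Hu|].
      assert (A := HN (a + (b - a))%nat ltac:(lia)). assert (B := HN a Ha).
      pose proof (Rabs_triang (E (a + (b - a))%nat - e) (e - E a)).
      rewrite (Rabs_minus_sym e) in H.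
      replace (E (a + (b - a))%nat - e + (e - E a)) with (E (a + (b - a))%nat - E a) in H by ring.
      assert (c * (E (a + (b - a))%nat - E a) <= c * Rabs (E (a + (b - a))%nat - E a))
        by (apply Rmult_le_compat_l; [lra|apply Rle_abs]).
      assert (c * Rabs (E (a + (b - a))%nat - E a) <=
              c * (Rabs (E (a + (b - a))%nat - e) + Rabs (E a - e)))
        by (apply Rmult_le_compat_l; lra).
      lra. }
    intros n m Hn Hm. destruct (Nat.le_ge_cases n m) as [h|h].
    - rewrite Rabs_minus_sym. apply H; lia.
    - apply H; lia. }
  apply ex_lim_seq_cauchy_corr in Hcau. destruct Hcau as [l Hl].
  exists l. apply is_lim_seq_Reals in Hl. split; [exact Hl|].
  intros n. apply Rnot_lt_le. intros Hgt.
  set (d := Rabs (l - u n) - c * (e - E n)).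
  destruct (Hl (d / 2)) as [N1 HN1]; [unfold d; lra|].
  destruct (scaled_tail_small E e c Hc HE (d / 2)) as [N2 HN2]; [unfold d; lra|].
  set (m := (n + N1 + N2)%nat).
  specialize (HN1 m ltac:(unfold m; lia)). specialize (HN2 m ltac:(unfold m; lia)).
  specialize (Hu n (N1 + N2)%nat). replace (n + (N1 + N2))%nat with m in Hu by (unfold m; lia).
  unfold Rdist in HN1.
  pose proof (Rabs_triang (l - u m) (u m - u n)).
  replace (l - u m + (u m - u n)) with (l - u n) in H by ring.
  rewrite (Rabs_minus_sym l (u m)) in H.
  assert (c * (E m - e) <= c * Rabs (E m - e)) by (apply Rmult_le_compat_l; [lra|apply Rle_abs]).
  unfold d in *. lra.
Qed.

Lemma Rmax_0_nonexpanding a b : Rabs (Rmax 0 a - Rmax 0 b) <= Rabs (a - b).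
Proof.
  unfold Rmax. destruct (Rle_dec 0 a), (Rle_dec 0 b); unfold Rabs; repeat destruct Rcase_abs; lra.
Qed.

Lemma real_Lim_seq_of_Un_cv (u : nat -> R) l : Un_cv u l -> real (Lim_seq u) = l.
Proof. intros H. apply is_lim_seq_Reals in H. rewrite (is_lim_seq_unique u l H). reflexivity. Qed.

Lemma eq_0_of_Rabs_lt_all a : (forall e, 0 < e -> Rabs a < e) -> a = 0.
Proof.
  intros H. destruct (Req_dec a 0) as [h|h]; [exact h|].
  specialize (H (Rabs a) (Rabs_pos_lt a h)). lra.
Qed.

Lemma coords_nonexpanding :
  (forall p q, Rabs (vx p - vx q) <= l1_dist p q) /\
  (forall p q, Rabs (vy p - vy q) <= l1_dist p q) /\
  (forall p q, Rabs (vz p - vz q) <= l1_dist p q).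
Proof.
  split; [|split]; intros p q; apply l1_dist_ge_coords.
Qed.

Section Picard.

Variables (g1 g2 g3 : vec -> R) (L : R) (x : vec).
Hypotheses (HL : 0 < L) (Hg1 : lipschitz g1 L) (Hg2 : lipschitz g2 L) (Hg3 : lipschitz g3 L).

Fixpoint picard_iter (n : nat) (t : R) : vec :=
  match n with
  | O => x
  | S m => (vx x + RInt (fun s => g1 (picard_iter m s)) 0 t,
            vy x + RInt (fun s => g2 (picard_iter m s)) 0 t,
            vz x + RInt (fun s => g3 (picard_iter m s)) 0 t)
  end.

Lemma picard_iter_continuous n s : continuity_pt3 (picard_iter n) s.
Proof.
  revert s. induction n as [|n IH]; intros s.
  - repeat split; apply continuity_pt_const; intros ? ?; reflexivity.
  - assert (Hc : forall g, lipschitz g L -> forall s, continuity_pt (fun t => g (picard_iter n t)) s)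
      by (intros g Hg s'; exact (lipschitz_continuity_pt g L _ s' HL Hg (IH s'))).
    repeat split; simpl; apply continuity_pt_RInt_0, Hc; assumption.
Qed.

Lemma lipschitz_picard_iter_continuous g n s :
  lipschitz g L -> continuity_pt (fun t => g (picard_iter n t)) s.
Proof. intros Hg. exact (lipschitz_continuity_pt g L _ s HL Hg (picard_iter_continuous n s)). Qed.

Definition field_size := Rabs (g1 x) + Rabs (g2 x) + Rabs (g3 x).

Lemma field_size_nonneg : 0 <= field_size.
Proof.
  unfold field_size. pose proof (Rabs_pos (g1 x)); pose proof (Rabs_pos (g2 x));
    pose proof (Rabs_pos (g3 x)). lra.
Qed.

Lemma picard_step_bound n t : 0 <= t ->
  l1_dist (picard_iter (S n) t) (picard_iter n t) <=
    field_size * (3 * L)^n / INR (Factorial.fact (S n)) * t^(S n).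
Proof.
  set (C := fun n => field_size * (3 * L)^n / INR (Factorial.fact (S n))).
  change (0 <= t -> l1_dist (picard_iter (S n) t) (picard_iter n t) <= C n * t^(S n)).
  revert t. induction n as [|n IH]; intros t Ht.
  - unfold l1_dist, C, field_size; cbn [picard_iter vx vy vz fst snd].
    rewrite !RInt_const. unfold scal; simpl; unfold mult; simpl.
    replace (vx x + (t - 0) * g1 x - vx x) with (t * g1 x) by ring.
    replace (vy x + (t - 0) * g2 x - vy x) with (t * g2 x) by ring.
    replace (vz x + (t - 0) * g3 x - vz x) with (t * g3 x) by ring.
    rewrite !Rabs_mult, (Rabs_right t) by lra. simpl. lra.
  - (* Each coordinate gains a factor [L t / (n+2)] through the integral. *)
    assert (Hcoord : forall g, lipschitz g L -> forall c,
      Rabs ((c + RInt (fun s => g (picard_iter (S n) s)) 0 t)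
            - (c + RInt (fun s => g (picard_iter n s)) 0 t))
      <= L * (C n * t ^ S (S n) / INR (S (S n)))).
    { intros g Hg c.
      replace (c + RInt (fun s => g (picard_iter (S n) s)) 0 t
               - (c + RInt (fun s => g (picard_iter n s)) 0 t))
        with (RInt (fun s => g (picard_iter (S n) s)) 0 t - RInt (fun s => g (picard_iter n s)) 0 t)
        by ring.
      rewrite RInt_minus_of_continuous by (intros; apply lipschitz_picard_iter_continuous, Hg).
      eapply Rle_trans; [apply (abs_RInt_le_RInt _ (fun s => (L * C n) * s^(S n))); [exact Ht| | |]|].
      - intros s. apply continuity_pt_minus; apply lipschitz_picard_iter_continuous, Hg.
      - intros s. apply (continuity_pt_mult (fun _ => _) (fun s => s^(S n))).
        + apply continuity_pt_const; intros ? ?; reflexivity.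
        + apply derivable_continuous_pt, derivable_pt_pow.
      - intros s Hs. eapply Rle_trans; [apply Hg|].
        rewrite Rmult_assoc. apply Rmult_le_compat_l; [lra|]. apply IH. lra.
      - rewrite RInt_scal_pow. right. field. apply not_0_INR. lia. }
    unfold l1_dist. cbn [picard_iter vx vy vz fst snd].
    eapply Rle_trans.
    { apply Rplus_le_compat; [apply Rplus_le_compat|];
        [apply (Hcoord g1 Hg1)|apply (Hcoord g2 Hg2)|apply (Hcoord g3 Hg3)]. }
    right. unfold C.
    change (Factorial.fact (S (S n))) with ((S (S n)) * Factorial.fact (S n))%nat.
    rewrite mult_INR. simpl pow. field. split; [apply INR_fact_neq_0|apply not_0_INR; lia].
Qed.

Lemma picard_cauchy_bound T t : 0 <= t <= T -> forall n j,
  l1_dist (picard_iter (n + j) t) (picard_iter n t) <=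
   field_size / (3 * L) *
   (exp_partial_sum (3 * L * T) (n + j) - exp_partial_sum (3 * L * T) n).
Proof.
  intros Ht n j. pose proof field_size_nonneg.
  induction j as [|j IH].
  - rewrite Nat.add_0_r, l1_dist_refl. lra.
  - rewrite Nat.add_succ_r.
    eapply Rle_trans; [apply l1_dist_triangle with (q := picard_iter (n + j) t)|].
    eapply Rle_trans; [apply Rplus_le_compat_r, (picard_step_bound (n + j) t (proj1 Ht))|].
    unfold exp_partial_sum at 1. rewrite tech5. fold (exp_partial_sum (3 * L * T) (n + j)).
    enough (field_size * (3 * L) ^ (n + j) / INR (Factorial.fact (S (n + j))) * t ^ S (n + j) <=
            field_size / (3 * L) *
            (/ INR (Factorial.fact (S (n + j))) * (3 * L * T) ^ S (n + j))) by lra.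
    replace (field_size / (3 * L) * (/ INR (Factorial.fact (S (n + j))) * (3 * L * T) ^ S (n + j)))
      with (field_size * (3 * L) ^ (n + j) / INR (Factorial.fact (S (n + j))) * T ^ S (n + j))
      by (rewrite !Rpow_mult_distr; simpl pow; field; split; [apply INR_fact_neq_0|lra]).
    apply Rmult_le_compat_l; [|apply pow_incr; lra].
    apply Rmult_le_pos; [apply Rmult_le_pos; [lra|apply pow_le; lra]|].
    left; apply Rinv_0_lt_compat, INR_fact_lt_0.
Qed.

(* Evaluated at [Rmax 0 t]: the iterates are only controlled for [t >= 0]. *)
Definition picard_limit (t : R) : vec :=
  (real (Lim_seq (fun n => vx (picard_iter n (Rmax 0 t)))),
   real (Lim_seq (fun n => vy (picard_iter n (Rmax 0 t)))),
   real (Lim_seq (fun n => vz (picard_iter n (Rmax 0 t))))).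

Definition picard_tail (T : R) (n : nat) :=
  3 * (field_size / (3 * L)) * (exp (3 * L * T) - exp_partial_sum (3 * L * T) n).

Lemma picard_tail_small T eps : 0 < eps -> exists N, forall n, (N <= n)%nat -> picard_tail T n < eps.
Proof.
  intros He. apply exp_tail_small; [|exact He].
  apply Rmult_le_pos; [lra|apply Rdiv_le_0_compat; [apply field_size_nonneg|lra]].
Qed.

Lemma picard_limit_tail T t : 0 <= T -> t <= T -> forall n,
  l1_dist (picard_limit t) (picard_iter n (Rmax 0 t)) <= picard_tail T n.
Proof.
  intros HT Ht n. unfold picard_tail.
  set (c := field_size / (3 * L)).
  assert (Hc : 0 <= c) by (apply Rdiv_le_0_compat; [apply field_size_nonneg|lra]).
  assert (Ht' : 0 <= Rmax 0 t <= T) by (split; [apply Rmax_l|apply Rmax_lub; lra]).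
  assert (HB := picard_cauchy_bound T (Rmax 0 t) Ht'). fold c in HB.
  assert (Hcoord : forall (pr : vec -> R), (forall p q, Rabs (pr p - pr q) <= l1_dist p q) ->
     Rabs (real (Lim_seq (fun n => pr (picard_iter n (Rmax 0 t)))) - pr (picard_iter n (Rmax 0 t)))
       <= c * (exp (3 * L * T) - exp_partial_sum (3 * L * T) n)).
  { intros pr Hpr.
    destruct (dominated_increments_cv (fun n => pr (picard_iter n (Rmax 0 t)))
                (exp_partial_sum (3 * L * T)) c (exp (3 * L * T)) Hc (exp_partial_sum_cv _))
      as [l [Hl Hb]].
    { intros m j. eapply Rle_trans; [apply Hpr|apply HB]. }
    rewrite (real_Lim_seq_of_Un_cv _ l Hl). apply Hb. }
  destruct coords_nonexpanding as [Hx [Hy Hz]].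
  unfold l1_dist at 1, picard_limit. cbn [vx vy vz fst snd].
  pose proof (Hcoord vx Hx). pose proof (Hcoord vy Hy). pose proof (Hcoord vz Hz). lra.
Qed.

Lemma picard_limit_continuous t0 : continuity_pt3 picard_limit t0.
Proof.
  set (T := Rmax 0 t0 + 1).
  assert (HT : 0 <= T) by (unfold T; pose proof (Rmax_l 0 t0); lra).
  assert (Ht0T : t0 <= T) by (unfold T; pose proof (Rmax_r 0 t0); lra).
  (* A uniform limit of continuous functions, via an [e/3] argument. *)
  assert (Hcoord : forall pr : vec -> R, (forall p q, Rabs (pr p - pr q) <= l1_dist p q) ->
     (forall n s, continuity_pt (fun t => pr (picard_iter n t)) s) ->
     continuity_pt (fun t => pr (picard_limit t)) t0).
  { intros pr Hpr Hpc. apply continuity_pt_from_ball. intros e He.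
    destruct (picard_tail_small T (e / 3)) as [N HN]; [lra|].
    assert (Hcn : continuity_pt (fun t => pr (picard_iter N (Rmax 0 t))) t0).
    { apply (continuity_pt_comp (fun t => Rmax 0 t) (fun s => pr (picard_iter N s))).
      - apply continuity_pt_nonexpanding, Rmax_0_nonexpanding.
      - apply Hpc. }
    destruct (continuity_pt_ball _ t0 (e / 3) Hcn) as [d [Hd Hn]]; [lra|].
    exists (Rmin d 1). split; [apply Rmin_glb_lt; lra|]. intros u Hu.
    pose proof (Rmin_l d 1). pose proof (Rmin_r d 1).
    assert (HuT : u <= T)
      by (unfold T; assert (Rabs (u - t0) < 1) as Hu1 by lra; apply Rabs_lt_between in Hu1;
          pose proof (Rmax_r 0 t0); lra).
    specialize (Hn u ltac:(lra)). simpl in Hn.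
    assert (A := Rle_trans _ _ _ (Hpr _ _) (picard_limit_tail T u HT HuT N)).
    assert (B := Rle_trans _ _ _ (Hpr _ _) (picard_limit_tail T t0 HT Ht0T N)).
    specialize (HN N (Nat.le_refl N)).
    replace (pr (picard_limit u) - pr (picard_limit t0)) with
      ((pr (picard_limit u) - pr (picard_iter N (Rmax 0 u))) +
       (pr (picard_iter N (Rmax 0 u)) - pr (picard_iter N (Rmax 0 t0))) -
       (pr (picard_limit t0) - pr (picard_iter N (Rmax 0 t0)))) by ring.
    eapply Rle_lt_trans; [apply Rabs_triang|].
    eapply Rle_lt_trans; [apply Rplus_le_compat_r, Rabs_triang|].
    rewrite Rabs_Ropp. lra. }
  destruct coords_nonexpanding as [Hx [Hy Hz]].
  split; [|split]; apply Hcoord; try assumption; intros n s; apply picard_iter_continuous.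
Qed.

Lemma lipschitz_picard_limit_continuous g s :
  lipschitz g L -> continuity_pt (fun t => g (picard_limit t)) s.
Proof. intros Hg. exact (lipschitz_continuity_pt g L _ s HL Hg (picard_limit_continuous s)). Qed.

Lemma picard_limit_integral (pr g : vec -> R) : lipschitz g L ->
  (forall p q, Rabs (pr p - pr q) <= l1_dist p q) ->
  (forall n t, pr (picard_iter (S n) t) = pr x + RInt (fun s => g (picard_iter n s)) 0 t) ->
  forall t, 0 <= t -> pr (picard_limit t) = pr x + RInt (fun s => g (picard_limit s)) 0 t.
Proof.
  intros Hg Hpr Hpic t Ht.
  assert (Htail : forall s n, 0 <= s <= t ->
            l1_dist (picard_limit s) (picard_iter n s) <= picard_tail t n).
  { intros s n Hs. rewrite <- (Rmax_right 0 s) at 2 by lra.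
    apply picard_limit_tail; lra. }
  apply Rminus_diag_uniq, eq_0_of_Rabs_lt_all. intros e He.
  destruct (picard_tail_small t (e / 2)) as [N1 HN1]; [lra|].
  destruct (picard_tail_small t (e / (2 * (t * L + 1)))) as [N2 HN2].
  { apply Rdiv_lt_0_compat; [lra|]. assert (0 <= t * L) by (apply Rmult_le_pos; lra). lra. }
  set (N := (N1 + N2)%nat).
  assert (A1 : Rabs (pr (picard_limit t) - pr (picard_iter (S N) t)) <= picard_tail t (S N))
    by (eapply Rle_trans; [apply Hpr|apply Htail; lra]).
  assert (A2 : Rabs (RInt (fun s => g (picard_iter N s)) 0 t - RInt (fun s => g (picard_limit s)) 0 t)
               <= t * (L * picard_tail t N)).
  { rewrite RInt_minus_of_continuous
      by (intros; first [apply lipschitz_picard_iter_continuous|apply lipschitz_picard_limit_continuous];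
          exact Hg).
    assert (Q := abs_RInt_le_const (fun s => g (picard_iter N s) - g (picard_limit s)) 0 t
                   (L * picard_tail t N) Ht).
    rewrite Rminus_0_r in Q. apply Q.
    - apply ex_RInt_of_continuous. intros s. apply continuity_pt_minus;
        [apply lipschitz_picard_iter_continuous|apply lipschitz_picard_limit_continuous]; exact Hg.
    - intros s Hs. eapply Rle_trans; [apply Hg|]. apply Rmult_le_compat_l; [lra|].
      rewrite l1_dist_sym. apply Htail. lra. }
  rewrite Hpic in A1.
  assert (B1 := HN1 (S N) ltac:(unfold N; lia)). assert (B2 := HN2 N ltac:(unfold N; lia)).
  assert (B2' : t * (L * picard_tail t N) <= e / 2).
  { assert (0 <= t * L) by (apply Rmult_le_pos; lra).
    assert (0 <= picard_tail t N) by (eapply Rle_trans; [apply l1_dist_nonneg|apply (Htail t); lra]).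
    assert (Hlt : (t * L + 1) * picard_tail t N <= (t * L + 1) * (e / (2 * (t * L + 1))))
      by (apply Rmult_le_compat_l; lra).
    replace ((t * L + 1) * (e / (2 * (t * L + 1)))) with (e / 2) in Hlt by (field; lra).
    nra. }
  replace (pr (picard_limit t) - (pr x + RInt (fun s : R => g (picard_limit s)) 0 t)) with
    ((pr (picard_limit t) - (pr x + RInt (fun s : R => g (picard_iter N s)) 0 t)) +
     (RInt (fun s => g (picard_iter N s)) 0 t - RInt (fun s => g (picard_limit s)) 0 t)) by ring.
  eapply Rle_lt_trans; [apply Rabs_triang|]. lra.
Qed.

Lemma picard_existence : exists p : R -> vec, p 0 = x /\
   (forall t, continuity_pt3 p t) /\
   (forall t, 0 < t -> is_derive (fun s => vx (p s)) t (g1 (p t)) /\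
                      is_derive (fun s => vy (p s)) t (g2 (p t)) /\
                      is_derive (fun s => vz (p s)) t (g3 (p t))).
Proof.
  exists picard_limit.
  destruct coords_nonexpanding as [Cx [Cy Cz]].
  assert (I1 := picard_limit_integral vx g1 Hg1 Cx (fun n t => eq_refl)).
  assert (I2 := picard_limit_integral vy g2 Hg2 Cy (fun n t => eq_refl)).
  assert (I3 := picard_limit_integral vz g3 Hg3 Cz (fun n t => eq_refl)).
  split; [|split; [exact picard_limit_continuous|]].
  - destruct x as [[a b] c].
    rewrite (surjective_pairing (picard_limit 0)), (surjective_pairing (fst (picard_limit 0))).
    change (fst (fst (picard_limit 0))) with (vx (picard_limit 0)).
    change (snd (fst (picard_limit 0))) with (vy (picard_limit 0)).
    change (snd (picard_limit 0)) with (vz (picard_limit 0)).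
    rewrite I1, I2, I3 by lra. rewrite !RInt_point. cbn. unfold zero; simpl.
    f_equal; [f_equal|]; ring.
  - intros t Ht.
    assert (Hloc : forall (pr g : vec -> R),
        (forall t, 0 <= t -> pr (picard_limit t) = pr x + RInt (fun s => g (picard_limit s)) 0 t) ->
        lipschitz g L -> is_derive (fun s => pr (picard_limit s)) t (g (picard_limit t))).
    { intros pr g Hi Hg.
      apply (is_derive_ext_loc (fun s => pr x + RInt (fun s => g (picard_limit s)) 0 s)).
      - exists (mkposreal t Ht). intros y Hy. simpl in Hy. unfold ball in Hy; simpl in Hy.
        unfold AbsRing_ball, abs, minus, plus, opp in Hy; simpl in Hy.
        apply Rabs_lt_between in Hy. symmetry. apply Hi. lra.
      - apply is_derive_RInt_0. intros s; apply lipschitz_picard_limit_continuous, Hg. }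
    split; [|split]; apply Hloc; assumption.
Qed.

End Picard.

(** * The Lorenz field and its Lyapunov function *)

Definition lorenz_x (l p : vec) := - vx l * vx p + vx l * vy p.
Definition lorenz_y (l p : vec) := vz l * vx p - vy p - vx p * vz p.
Definition lorenz_z (l p : vec) := - vy l * vz p + vx p * vy p.

(* With [l = (sigma, b, r)]: [V = r x^2 + sigma y^2 + sigma (z - 2r)^2], whose derivative along
   the field is [-2 sigma (r x^2 + y^2 + b (z - r)^2) + 2 sigma b r^2]. *)
Definition lyap (l p : vec) :=
  vz l * vx p ^ 2 + vx l * vy p ^ 2 + vx l * (vz p - 2 * vz l) ^ 2.

Definition lyap_deriv (l p : vec) :=
  2 * vz l * vx p * lorenz_x l p + 2 * vx l * vy p * lorenz_y l p
  + 2 * vx l * (vz p - 2 * vz l) * lorenz_z l p.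

Definition in_box (m M : R) (l : vec) := m <= vx l <= M /\ m <= vy l <= M /\ m <= vz l <= M.

Definition absorb_level (m M : R) := 2 * M^3 + (1 + M + 2 * M / m) * (M^3 + 1 / (2 * m)).

Definition lyap_radius (m M W : R) := 2 * M + 1 + W / m.

Lemma mult3_le_pow3 a b c M : 0 <= a <= M -> 0 <= b <= M -> 0 <= c <= M -> a * b * c <= M^3.
Proof.
  intros. simpl. assert (a * b <= M * M) by (apply Rmult_le_compat; lra).
  assert (0 <= a * b) by nra. replace (M * (M * (M * 1))) with (M * M * M) by ring.
  apply Rmult_le_compat; lra.
Qed.

Lemma le_div_of_mult_le a b m : 0 < m -> m * a <= b -> a <= b / m.
Proof.
  intros Hm H. apply Rmult_le_reg_r with m; [lra|].
  unfold Rdiv. rewrite Rmult_assoc, Rinv_l by lra. lra.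
Qed.

Lemma lyap_deriv_le_neg1 m M l p : 0 < m -> in_box m M l -> absorb_level m M <= lyap l p ->
  lyap_deriv l p <= -1.
Proof.
  intros Hm [[s1 s2] [[b1 b2] [r1 r2]]] HV.
  unfold absorb_level, lyap, lyap_deriv, lorenz_x, lorenz_y, lorenz_z in *.
  set (s := vx l) in *. set (b := vy l) in *. set (r := vz l) in *.
  set (x := vx p) in *. set (y := vy p) in *. set (z := vz p) in *.
  set (Q := r * x^2 + y^2 + b * (z - r)^2).
  set (C := 1 + M + 2 * M / m) in *.
  assert (HMm : 1 <= M / m) by (apply le_div_of_mult_le; lra).
  assert (HC1 : 1 <= C) by (unfold C; lra).
  assert (HC2 : s <= C) by (unfold C; lra).
  assert (HC3 : 2 * s <= C * b).
  { assert (Hbm : 1 <= b / m) by (apply le_div_of_mult_le; lra).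
    assert (E : 2 * M / m * b = 2 * M * (b / m)) by (field; lra).
    unfold C. nra. }
  assert (Hsr : s * r * r <= M^3) by (apply mult3_le_pow3; lra).
  assert (Hbr : b * r * r <= M^3) by (apply mult3_le_pow3; lra).
  (* [V] is controlled by [Q], the quantity dissipated by the field. *)
  assert (HVQ : r * x^2 + s * y^2 + s * (z - 2 * r)^2 <= C * Q + 2 * M^3).
  { unfold Q. assert (0 <= (C - 1) * (r * x^2)) by (apply Rmult_le_pos; nra).
    assert (0 <= (C - s) * y^2) by (apply Rmult_le_pos; nra).
    assert (s * (z - 2 * r)^2 <= 2 * s * (z - r)^2 + 2 * (s * r * r)).
    { assert (0 <= s * (z * z)) by (apply Rmult_le_pos; nra).
      replace (2 * s * (z - r)^2 + 2 * (s * r * r) - s * (z - 2 * r)^2) with (s * (z * z)) by ring.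
      lra. }
    assert (2 * s * (z - r)^2 <= C * b * (z - r)^2)
      by (apply Rmult_le_compat_r; [apply pow2_ge_0|lra]).
    lra. }
  replace (2 * r * x * (- s * x + s * y) + 2 * s * y * (r * x - y - x * z)
           + 2 * s * (z - 2 * r) * (- b * z + x * y))
    with (- 2 * s * Q + 2 * s * (b * r * r)) by (unfold Q; ring).
  assert (HQ : M^3 + 1 / (2 * m) <= Q) by (apply Rmult_le_reg_l with C; lra).
  assert (2 * s * (M^3 + 1 / (2*m)) <= 2 * s * Q) by (apply Rmult_le_compat_l; lra).
  assert (2 * s * (b * r * r) <= 2 * s * M^3) by (apply Rmult_le_compat_l; lra).
  assert (2 * s * (1 / (2 * m)) >= 1).
  { replace (2 * s * (1 / (2 * m))) with (s / m) by (field; lra).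
    apply Rle_ge, le_div_of_mult_le; lra. }
  nra.
Qed.

Lemma Rabs_le_1_plus_sqr a : Rabs a <= 1 + a^2.
Proof. unfold Rabs; destruct Rcase_abs; nra. Qed.

Lemma coords_le_lyap_radius m M l p W : 0 < m -> in_box m M l -> lyap l p <= W ->
  in_cube (lyap_radius m M W) p.
Proof.
  intros Hm [[s1 s2] [[b1 b2] [r1 r2]]] HV. unfold in_cube, lyap, lyap_radius in *.
  assert (H0 : m * vx p^2 <= vz l * vx p^2) by (apply Rmult_le_compat_r; [apply pow2_ge_0|lra]).
  assert (H1 : m * vy p^2 <= vx l * vy p^2) by (apply Rmult_le_compat_r; [apply pow2_ge_0|lra]).
  assert (H2 : m * (vz p - 2 * vz l)^2 <= vx l * (vz p - 2 * vz l)^2)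
    by (apply Rmult_le_compat_r; [apply pow2_ge_0|lra]).
  pose proof (pow2_ge_0 (vx p)); pose proof (pow2_ge_0 (vy p));
    pose proof (pow2_ge_0 (vz p - 2 * vz l)).
  assert (Hx : vx p ^ 2 <= W / m) by (apply le_div_of_mult_le; nra).
  assert (Hy : vy p ^ 2 <= W / m) by (apply le_div_of_mult_le; nra).
  assert (Hz : (vz p - 2 * vz l) ^ 2 <= W / m) by (apply le_div_of_mult_le; nra).
  pose proof (Rabs_le_1_plus_sqr (vx p)). pose proof (Rabs_le_1_plus_sqr (vy p)).
  pose proof (Rabs_le_1_plus_sqr (vz p - 2 * vz l)).
  pose proof (Rabs_triang (vz p - 2 * vz l) (2 * vz l)) as Htri.
  replace (vz p - 2 * vz l + 2 * vz l) with (vz p) in Htri by ring.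
  rewrite (Rabs_right (2 * vz l)) in Htri by lra. lra.
Qed.

Lemma is_derive_lyap (l : vec) (u : R -> vec) t a b c :
  is_derive (fun s => vx (u s)) t a -> is_derive (fun s => vy (u s)) t b ->
  is_derive (fun s => vz (u s)) t c ->
  is_derive (fun s => lyap l (u s)) t
    (2 * vz l * vx (u t) * a + 2 * vx l * vy (u t) * b + 2 * vx l * (vz (u t) - 2 * vz l) * c).
Proof.
  intros Ha Hb Hc. apply is_derive_Reals in Ha, Hb, Hc. apply is_derive_Reals. unfold lyap.
  replace (2 * vz l * vx (u t) * a + 2 * vx l * vy (u t) * b + 2 * vx l * (vz (u t) - 2 * vz l) * c)
    with ((vz l * (INR 2 * vx (u t) ^ 1 * a) + vx l * (INR 2 * vy (u t) ^ 1 * b))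
          + vx l * (INR 2 * (vz (u t) - 2 * vz l) ^ 1 * (c - 0))) by (simpl; ring).
  apply (derivable_pt_lim_plus (fun s => vz l * vx (u s) ^ 2 + vx l * vy (u s) ^ 2)
           (fun s => vx l * (vz (u s) - 2 * vz l) ^ 2)).
  apply (derivable_pt_lim_plus (fun s => vz l * vx (u s) ^ 2) (fun s => vx l * vy (u s) ^ 2)).
  - apply (derivable_pt_lim_scal (fun s => vx (u s) ^ 2)).
    apply (derivable_pt_lim_comp (fun s => vx (u s)) (fun y => y^2)); [exact Ha|apply derivable_pt_lim_pow].
  - apply (derivable_pt_lim_scal (fun s => vy (u s) ^ 2)).
    apply (derivable_pt_lim_comp (fun s => vy (u s)) (fun y => y^2)); [exact Hb|apply derivable_pt_lim_pow].
  - apply (derivable_pt_lim_scal (fun s => (vz (u s) - 2 * vz l) ^ 2)).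
    apply (derivable_pt_lim_comp (fun s => vz (u s) - 2 * vz l) (fun y => y^2));
      [|apply derivable_pt_lim_pow].
    apply (derivable_pt_lim_minus (fun s => vz (u s)) (fun _ => 2 * vz l));
      [exact Hc|apply derivable_pt_lim_const].
Qed.

Lemma continuity_pt_sqr_comp (f : R -> R) t : continuity_pt f t -> continuity_pt (fun s => f s ^ 2) t.
Proof.
  intros. apply (continuity_pt_comp f (fun y => y^2)); [assumption|].
  apply derivable_continuous_pt, derivable_pt_pow.
Qed.

Lemma continuity_pt_lyap (l : vec) (u : R -> vec) t :
  continuity_pt3 u t -> continuity_pt (fun s => lyap l (u s)) t.
Proof.
  intros [Ha [Hb Hc]]. unfold lyap.
  assert (Hz : continuity_pt (fun s => vz (u s) - 2 * vz l) t).
  { apply (continuity_pt_minus (fun s => vz (u s)) (fun _ => 2 * vz l)); [assumption|].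
    apply continuity_pt_const; intros ? ?; reflexivity. }
  apply (continuity_pt_plus (fun s => vz l * vx (u s) ^ 2 + vx l * vy (u s) ^ 2)
           (fun s => vx l * (vz (u s) - 2 * vz l) ^ 2));
    [apply (continuity_pt_plus (fun s => vz l * vx (u s) ^ 2) (fun s => vx l * vy (u s) ^ 2))|];
    apply continuity_pt_scal, continuity_pt_sqr_comp; assumption.
Qed.

Lemma lyap_nonneg l p : posoct l -> 0 <= lyap l p.
Proof.
  intros [H1 [H2 H3]]. unfold lyap.
  pose proof (pow2_ge_0 (vx p)); pose proof (pow2_ge_0 (vy p));
    pose proof (pow2_ge_0 (vz p - 2 * vz l)).
  assert (0 <= vz l * vx p ^ 2) by (apply Rmult_le_pos; lra).
  assert (0 <= vx l * vy p ^ 2) by (apply Rmult_le_pos; lra).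
  assert (0 <= vx l * (vz p - 2 * vz l) ^ 2) by (apply Rmult_le_pos; lra). lra.
Qed.

Definition lyap_cube_bound (l : vec) (K : R) := vz l * K^2 + vx l * K^2 + vx l * (K + 2 * vz l)^2.

Lemma lyap_le_cube_bound l p K : posoct l -> 0 <= K -> in_cube K p -> lyap l p <= lyap_cube_bound l K.
Proof.
  intros [H1 [H2 H3]] HK [a [b c]]. unfold lyap, lyap_cube_bound.
  assert (vx p ^ 2 <= K^2)
    by (rewrite <- (pow2_abs (vx p)); apply pow_incr; split; [apply Rabs_pos|exact a]).
  assert (vy p ^ 2 <= K^2)
    by (rewrite <- (pow2_abs (vy p)); apply pow_incr; split; [apply Rabs_pos|exact b]).
  assert ((vz p - 2 * vz l) ^ 2 <= (K + 2 * vz l)^2).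
  { rewrite <- (pow2_abs (vz p - 2 * vz l)). apply pow_incr. split; [apply Rabs_pos|].
    eapply Rle_trans; [apply Rabs_triang|].
    rewrite Rabs_Ropp, Rabs_mult, (Rabs_right 2), (Rabs_right (vz l)) by lra. lra. }
  assert (vz l * vx p ^ 2 <= vz l * K^2) by (apply Rmult_le_compat_l; lra).
  assert (vx l * vy p ^ 2 <= vx l * K^2) by (apply Rmult_le_compat_l; lra).
  assert (vx l * (vz p - 2 * vz l) ^ 2 <= vx l * (K + 2 * vz l)^2) by (apply Rmult_le_compat_l; lra).
  lra.
Qed.

Lemma absorb_level_pos m M : 0 < m -> m <= M -> 0 < absorb_level m M.
Proof.
  intros Hm HM. unfold absorb_level.
  assert (0 < M^3) by (apply pow_lt; lra).
  assert (0 <= 2 * M / m) by (apply Rdiv_le_0_compat; lra).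
  assert (0 < 1 / (2 * m)) by (apply Rdiv_lt_0_compat; lra).
  assert (0 < (1 + M + 2 * M / m) * (M ^ 3 + 1 / (2 * m))) by (apply Rmult_lt_0_compat; lra).
  lra.
Qed.

Definition mincoord (c : vec) := Rmin (vx c) (Rmin (vy c) (vz c)).
Definition maxcoord (c : vec) := Rmax (vx c) (Rmax (vy c) (vz c)).

Lemma mincoord_le c : mincoord c <= vx c /\ mincoord c <= vy c /\ mincoord c <= vz c.
Proof.
  unfold mincoord. pose proof (Rmin_l (vx c) (Rmin (vy c) (vz c))).
  pose proof (Rmin_r (vx c) (Rmin (vy c) (vz c))). pose proof (Rmin_l (vy c) (vz c)).
  pose proof (Rmin_r (vy c) (vz c)). lra.
Qed.

Lemma maxcoord_ge c : vx c <= maxcoord c /\ vy c <= maxcoord c /\ vz c <= maxcoord c.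
Proof.
  unfold maxcoord. pose proof (Rmax_l (vx c) (Rmax (vy c) (vz c))).
  pose proof (Rmax_r (vx c) (Rmax (vy c) (vz c))). pose proof (Rmax_l (vy c) (vz c)).
  pose proof (Rmax_r (vy c) (vz c)). lra.
Qed.

Lemma mincoord_pos c : posoct c -> 0 < mincoord c.
Proof. intros [a [b d]]. unfold mincoord. repeat apply Rmin_glb_lt; lra. Qed.

Lemma in_box_coords l : in_box (mincoord l) (maxcoord l) l.
Proof. pose proof (mincoord_le l). pose proof (maxcoord_ge l). unfold in_box. lra. Qed.

(** * Existence of solutions *)

Definition clamp (R0 s : R) := Rmax (- R0) (Rmin R0 s).
Definition clamp3 (R0 : R) (p : vec) : vec := (clamp R0 (vx p), clamp R0 (vy p), clamp R0 (vz p)).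

Lemma clamp_nonexpanding R0 a b : 0 <= R0 -> Rabs (clamp R0 a - clamp R0 b) <= Rabs (a - b).
Proof.
  intros. unfold clamp, Rmax, Rmin. repeat destruct Rle_dec; unfold Rabs; repeat destruct Rcase_abs; lra.
Qed.

Lemma Rabs_clamp_le R0 a : 0 <= R0 -> Rabs (clamp R0 a) <= R0.
Proof.
  intros. unfold clamp, Rmax, Rmin. repeat destruct Rle_dec; unfold Rabs; repeat destruct Rcase_abs; lra.
Qed.

Lemma clamp_id R0 a : Rabs a <= R0 -> clamp R0 a = a.
Proof.
  intros H. unfold clamp, Rmax, Rmin. unfold Rabs in H; destruct Rcase_abs; repeat destruct Rle_dec; lra.
Qed.

Lemma clamp3_id R0 p : Rabs (vx p) <= R0 -> Rabs (vy p) <= R0 -> Rabs (vz p) <= R0 -> clamp3 R0 p = p.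
Proof. intros. unfold clamp3. rewrite !clamp_id by assumption. destruct p as [[a b] c]. reflexivity. Qed.

Lemma l1_dist_clamp3 R0 p q : 0 <= R0 -> l1_dist (clamp3 R0 p) (clamp3 R0 q) <= l1_dist p q.
Proof.
  intros H. unfold l1_dist, clamp3; cbn [vx vy vz fst snd].
  pose proof (clamp_nonexpanding R0 (vx p) (vx q) H). pose proof (clamp_nonexpanding R0 (vy p) (vy q) H).
  pose proof (clamp_nonexpanding R0 (vz p) (vz q) H). lra.
Qed.

Lemma Rabs_mult_sub_le a1 a2 b1 b2 R0 : Rabs a1 <= R0 -> Rabs b2 <= R0 ->
  Rabs (a1 * a2 - b1 * b2) <= R0 * (Rabs (a1 - b1) + Rabs (a2 - b2)).
Proof.
  intros H1 H2. replace (a1 * a2 - b1 * b2) with (a1 * (a2 - b2) + b2 * (a1 - b1)) by ring.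
  eapply Rle_trans; [apply Rabs_triang|]. rewrite !Rabs_mult.
  assert (Rabs a1 * Rabs (a2 - b2) <= R0 * Rabs (a2 - b2)) by (apply Rmult_le_compat_r; [apply Rabs_pos|lra]).
  assert (Rabs b2 * Rabs (a1 - b1) <= R0 * Rabs (a1 - b1)) by (apply Rmult_le_compat_r; [apply Rabs_pos|lra]).
  lra.
Qed.

Definition clamped_lipschitz_const (l : vec) R0 := Rabs (vx l) + Rabs (vy l) + Rabs (vz l) + 2 * R0 + 2.

Lemma clamped_lipschitz_const_pos l R0 : 0 <= R0 -> 0 < clamped_lipschitz_const l R0.
Proof.
  intros. unfold clamped_lipschitz_const.
  pose proof (Rabs_pos (vx l)). pose proof (Rabs_pos (vy l)). pose proof (Rabs_pos (vz l)). lra.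
Qed.

Lemma lipschitz_clamp3 (F : vec -> R) l R0 : 0 <= R0 ->
  (forall p q, Rabs (vx p) <= R0 -> Rabs (vy p) <= R0 -> Rabs (vz p) <= R0 ->
               Rabs (vx q) <= R0 -> Rabs (vy q) <= R0 -> Rabs (vz q) <= R0 ->
               Rabs (F p - F q) <= clamped_lipschitz_const l R0 * l1_dist p q) ->
  lipschitz (fun p => F (clamp3 R0 p)) (clamped_lipschitz_const l R0).
Proof.
  intros H0 HF p q.
  eapply Rle_trans; [apply HF; unfold clamp3; cbn [vx vy vz fst snd]; apply Rabs_clamp_le; lra|].
  apply Rmult_le_compat_l; [left; apply clamped_lipschitz_const_pos; lra|].
  apply l1_dist_clamp3; lra.
Qed.

Lemma lipschitz_lorenz_clamp3 l R0 : 0 <= R0 ->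
  lipschitz (fun p => lorenz_x l (clamp3 R0 p)) (clamped_lipschitz_const l R0) /\
  lipschitz (fun p => lorenz_y l (clamp3 R0 p)) (clamped_lipschitz_const l R0) /\
  lipschitz (fun p => lorenz_z l (clamp3 R0 p)) (clamped_lipschitz_const l R0).
Proof.
  intros H0.
  pose proof (Rabs_pos (vx l)). pose proof (Rabs_pos (vy l)). pose proof (Rabs_pos (vz l)).
  split; [|split]; apply lipschitz_clamp3; [lra| |lra| |lra|];
    intros p q Hp1 Hp2 Hp3 Hq1 Hq2 Hq3; unfold l1_dist, clamped_lipschitz_const;
    pose proof (Rabs_pos (vx p - vx q)); pose proof (Rabs_pos (vy p - vy q));
    pose proof (Rabs_pos (vz p - vz q)).
  - unfold lorenz_x.
    replace (- vx l * vx p + vx l * vy p - (- vx l * vx q + vx l * vy q))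
      with (vx l * (vy p - vy q) - vx l * (vx p - vx q)) by ring.
    eapply Rle_trans; [apply Rabs_triang|]. rewrite Rabs_Ropp, !Rabs_mult. nra.
  - unfold lorenz_y.
    replace (vz l * vx p - vy p - vx p * vz p - (vz l * vx q - vy q - vx q * vz q)) with
      (vz l * (vx p - vx q) + - (vy p - vy q) + - (vx p * vz p - vx q * vz q)) by ring.
    pose proof (Rabs_mult_sub_le (vx p) (vz p) (vx q) (vz q) R0 Hp1 Hq3).
    eapply Rle_trans; [apply Rabs_triang|]. rewrite Rabs_Ropp.
    eapply Rle_trans; [apply Rplus_le_compat_r, Rabs_triang|]. rewrite Rabs_Ropp, Rabs_mult. nra.
  - unfold lorenz_z.
    replace (- vy l * vz p + vx p * vy p - (- vy l * vz q + vx q * vy q)) with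
      ((vx p * vy p - vx q * vy q) + - (vy l * (vz p - vz q))) by ring.
    pose proof (Rabs_mult_sub_le (vx p) (vy p) (vx q) (vy q) R0 Hp1 Hq2).
    eapply Rle_trans; [apply Rabs_triang|]. rewrite Rabs_Ropp, Rabs_mult. nra.
Qed.

Lemma continuity_pt_at_right_0 (f : R -> R) : continuity_pt f 0 -> filterlim f (at_right 0) (locally (f 0)).
Proof.
  intros H. apply continuity_pt_filterlim in H.
  eapply filterlim_filter_le_1; [|exact H]. apply filter_le_within.
Qed.

Lemma lorenz_solution_exists l x : posoct l -> exists u, lorenz_solution l u /\ u 0 = x.
Proof.
  intros Hl. pose proof (in_box_coords l) as Hbox. pose proof (mincoord_pos l Hl) as Hm.
  set (m := mincoord l) in *. set (M := maxcoord l) in *.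
  set (W := Rmax (lyap l x) (absorb_level m M)). set (W' := W + 1). set (R0 := lyap_radius m M W').
  assert (HW0 : 0 <= W) by (unfold W; eapply Rle_trans; [apply lyap_nonneg, Hl|apply Rmax_l]).
  assert (HR0 : 0 <= R0).
  { unfold R0, lyap_radius. assert (0 <= W' / m) by (apply Rdiv_le_0_compat; unfold W'; lra).
    destruct Hbox as [[h1 h2] _]. lra. }
  destruct (lipschitz_lorenz_clamp3 l R0 HR0) as [H1 [H2 H3]].
  destruct (picard_existence _ _ _ _ x (clamped_lipschitz_const_pos l R0 HR0) H1 H2 H3)
    as [p [Hp0 [Hpc Hpd]]].
  set (dg := fun t => 2 * vz l * vx (p t) * lorenz_x l (clamp3 R0 (p t))
                      + 2 * vx l * vy (p t) * lorenz_y l (clamp3 R0 (p t))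
                      + 2 * vx l * (vz (p t) - 2 * vz l) * lorenz_z l (clamp3 R0 (p t))).
  assert (Hbar : forall t, 0 <= t -> lyap l (p t) <= W).
  { apply (sublevel_forward_invariant (fun s => lyap l (p s)) dg W W').
    - intros t Ht. destruct (Hpd t Ht) as [a [b c]]. apply is_derive_lyap; assumption.
    - apply continuity_pt_lyap, Hpc.
    - intros t Ht [HW1 HW2].
      destruct (coords_le_lyap_radius m M l (p t) W' Hm Hbox HW2) as [c1 [c2 c3]].
      unfold dg. rewrite clamp3_id by assumption. fold (lyap_deriv l (p t)).
      assert (lyap_deriv l (p t) <= -1); [|lra].
      apply (lyap_deriv_le_neg1 m M); try assumption. eapply Rle_trans; [apply Rmax_r|exact HW1].
    - rewrite Hp0. apply Rmax_l.
    - unfold W'; lra. }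
  assert (Hid : forall t, 0 <= t -> clamp3 R0 (p t) = p t).
  { intros t Ht. destruct (coords_le_lyap_radius m M l (p t) W' Hm Hbox) as [c1 [c2 c3]].
    - specialize (Hbar t Ht). unfold W'; lra.
    - apply clamp3_id; assumption. }
  exists p. split; [|exact Hp0]. split.
  - intros t Ht. destruct (Hpd t Ht) as [a [b c]]. rewrite (Hid t) in a, b, c by lra.
    exact (conj a (conj b c)).
  - destruct (Hpc 0) as [a [b c]]. split; [|split]; apply continuity_pt_at_right_0; assumption.
Qed.

(** * Dissipativity and continuous dependence on the parameters *)

(* [lorenz_solution] only gives right continuity at [0]; freezing the solution at its initial
   value for [t < 0] turns this into the two-sided [continuity_pt]. *)
Definition extend_left (u : R -> vec) (t : R) : vec := if Rle_dec t 0 then u 0 else u t.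

Lemma extend_left_eq u t : 0 <= t -> extend_left u t = u t.
Proof. intros. unfold extend_left. destruct (Rle_dec t 0); [f_equal; lra|reflexivity]. Qed.

Lemma continuity_pt_extend_left_0 (u : R -> vec) (pr : vec -> R) :
  filterlim (fun s => pr (u s)) (at_right 0) (locally (pr (u 0))) ->
  continuity_pt (fun s => pr (extend_left u s)) 0.
Proof.
  intros H. apply continuity_pt_from_ball. intros e He.
  apply filterlim_locally with (eps := mkposreal e He) in H. destruct H as [d Hd].
  exists d. split; [apply cond_pos|]. intros s Hsd. unfold extend_left.
  destruct (Rle_dec 0 0) as [_|n]; [|lra].
  destruct (Rle_dec s 0); [rewrite Rminus_diag, Rabs_R0; lra|].
  rewrite Rminus_0_r in Hsd. apply Hd; [|lra].
  unfold ball; simpl. unfold AbsRing_ball, abs, minus, plus, opp; simpl.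
  rewrite Ropp_0, Rplus_0_r. exact Hsd.
Qed.

Lemma is_derive_extend_left (u : R -> vec) (pr : vec -> R) t d : 0 < t ->
  is_derive (fun s => pr (u s)) t d -> is_derive (fun s => pr (extend_left u s)) t d.
Proof.
  intros Ht H. apply (is_derive_ext_loc (fun s => pr (u s))); [|exact H].
  exists (mkposreal t Ht). intros y Hy. unfold ball in Hy; simpl in Hy.
  unfold AbsRing_ball, abs, minus, plus, opp in Hy; simpl in Hy. apply Rabs_lt_between in Hy.
  rewrite extend_left_eq by lra. reflexivity.
Qed.

Lemma lorenz_solution_extend_left l u : lorenz_solution l u ->
  (forall t, 0 < t ->
     is_derive (fun s => vx (extend_left u s)) t (lorenz_x l (extend_left u t)) /\
     is_derive (fun s => vy (extend_left u s)) t (lorenz_y l (extend_left u t)) /\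
     is_derive (fun s => vz (extend_left u s)) t (lorenz_z l (extend_left u t))) /\
  (forall t, 0 <= t -> continuity_pt3 (extend_left u) t).
Proof.
  intros [Hd [H1 [H2 H3]]].
  assert (D : forall t, 0 < t ->
     is_derive (fun s => vx (extend_left u s)) t (lorenz_x l (extend_left u t)) /\
     is_derive (fun s => vy (extend_left u s)) t (lorenz_y l (extend_left u t)) /\
     is_derive (fun s => vz (extend_left u s)) t (lorenz_z l (extend_left u t))).
  { intros t Ht. rewrite extend_left_eq by lra. destruct (Hd t Ht) as [a [b c]].
    split; [|split]; apply is_derive_extend_left; assumption. }
  split; [exact D|]. intros t Ht. destruct (Req_dec t 0) as [->|Hn].
  - split; [|split]; apply continuity_pt_extend_left_0; assumption.
  - destruct (D t ltac:(lra)) as [a [b c]].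
    split; [|split]; eapply is_derive_continuity_pt; eassumption.
Qed.

Lemma lyap_decay m M l u : 0 < m -> in_box m M l -> lorenz_solution l u ->
  forall t, 0 <= t -> lyap l (u t) <= Rmax (absorb_level m M) (lyap l (u 0) - t).
Proof.
  intros Hm Hb Hs t Ht. destruct (lorenz_solution_extend_left l u Hs) as [Hd Hc].
  rewrite <- (extend_left_eq u t Ht), <- (extend_left_eq u 0 (Rle_refl 0)).
  rewrite <- (Rmult_1_l t) at 2.
  apply (descent_to_level (fun s => lyap l (extend_left u s))
           (fun s => lyap_deriv l (extend_left u s))); [lra| | | |exact Ht].
  - intros s Hs'. destruct (Hd s Hs') as [a [b c]]. apply is_derive_lyap; assumption.
  - apply continuity_pt_lyap, Hc, Rle_refl.
  - intros s _ HW. apply (lyap_deriv_le_neg1 m M); assumption.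
Qed.

Lemma lorenz_solution_in_cube m M l u W : 0 < m -> in_box m M l -> lorenz_solution l u ->
  lyap l (u 0) <= W -> absorb_level m M <= W ->
  forall t, 0 <= t -> in_cube (lyap_radius m M W) (u t).
Proof.
  intros Hm Hb Hu H0 HW t Ht. apply (coords_le_lyap_radius m M l); [exact Hm|exact Hb|].
  eapply Rle_trans; [apply (lyap_decay m M l u Hm Hb Hu t Ht)|]. apply Rmax_lub; lra.
Qed.

Lemma attractor_lyap_bound m M l A : 0 < m -> in_box m M l -> posoct l -> is_global_attractor l A ->
  forall a, A a -> lyap l a <= absorb_level m M.
Proof.
  intros Hm Hb Hl [[_ [Mb HMb]] [Hinv _]] a Ha.
  assert (HmM : m <= M) by (destruct Hb as [[h1 h2] _]; lra).
  assert (HMb0 : 0 <= Mb) by (eapply Rle_trans; [apply edist_nonneg|apply (HMb a Ha)]).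
  set (S := lyap_cube_bound l Mb).
  assert (HS : forall x, A x -> lyap l x <= S)
    by (intros x Hx; apply lyap_le_cube_bound, in_cube_of_edist_0, HMb; assumption).
  assert (HS0 : 0 <= S) by (eapply Rle_trans; [apply (lyap_nonneg l a Hl)|apply HS, Ha]).
  (* [a] is the image at time [S + 1] of a point of [A], and [lyap] drops by [1] per unit time. *)
  destruct (proj1 (Hinv (S + 1) ltac:(lra) a) Ha) as [x [Hx [u [Hu [Hu0 Hut]]]]].
  assert (D := lyap_decay m M l u Hm Hb Hu (S + 1) ltac:(lra)). rewrite Hut, Hu0 in D.
  specialize (HS x Hx). pose proof (absorb_level_pos m M Hm HmM).
  eapply Rle_trans; [exact D|]. apply Rmax_lub; lra.
Qed.

Lemma two_mult_le_sum_sqr a b : 2 * a * b <= a^2 + b^2.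
Proof. pose proof (pow2_ge_0 (a - b)). nra. Qed.

Lemma two_mult3_le k K a b : Rabs k <= K -> 2 * k * a * b <= K * (a^2 + b^2).
Proof.
  intros Hk. pose proof (two_mult_le_sum_sqr a b). pose proof (two_mult_le_sum_sqr (-a) b).
  pose proof (Rabs_pos k). pose proof (pow2_ge_0 a). pose proof (pow2_ge_0 b).
  unfold Rabs in Hk; destruct Rcase_abs; nra.
Qed.

Lemma sqr_mult_le d w K : Rabs w <= K -> (d * w)^2 <= K^2 * d^2.
Proof.
  intros H. replace ((d * w)^2) with (d^2 * w^2) by ring.
  assert (w^2 <= K^2) by (rewrite <- (pow2_abs w); apply pow_incr; split; [apply Rabs_pos|exact H]).
  pose proof (pow2_ge_0 d). nra.
Qed.

Definition lorenz_sep_rate (K M : R) := 2 * M + 4 * K + 3.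

(* The left-hand side is the derivative of [|p - q|^2] along solutions for [l] and [mu]. *)
Lemma lorenz_sep_deriv_bound l mu p q K M : 0 <= K ->
  0 <= vx l <= M -> 0 <= vy l <= M -> 0 <= vz l <= M -> in_cube K p -> in_cube K q ->
  2 * (vx p - vx q) * (lorenz_x l p - lorenz_x mu q) + 2 * (vy p - vy q) * (lorenz_y l p - lorenz_y mu q)
  + 2 * (vz p - vz q) * (lorenz_z l p - lorenz_z mu q)
  <= lorenz_sep_rate K M * sq_dist p q + 4 * K^2 * sq_dist l mu.
Proof.
  intros HK [s1 s2] [b1 b2] [r1 r2] [_ [Hpy Hpz]] [Hqx [Hqy Hqz]].
  unfold lorenz_x, lorenz_y, lorenz_z, sq_dist, lorenz_sep_rate.
  set (a := vx p - vx q). set (b := vy p - vy q). set (c := vz p - vz q).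
  set (ds := vx l - vx mu). set (db := vy l - vy mu). set (dr := vz l - vz mu).
  match goal with |- ?L <= _ => replace L with
    (2 * vx l * a * b - 2 * vx l * a^2 + 2 * a * (ds * (vy q - vx q))
     + 2 * vz l * a * b + 2 * b * (dr * vx q) - 2 * b^2 + 2 * (- vz p) * a * b + 2 * (- vx q) * b * c
     - 2 * vy l * c^2 + 2 * c * (db * (- vz q)) + 2 * (vy p) * c * a + 2 * (vx q) * c * b)
    by (unfold a, b, c, ds, db, dr; ring) end.
  assert (T1 := two_mult3_le (vx l) M a b ltac:(rewrite Rabs_right; lra)).
  assert (T3 : 2 * a * (ds * (vy q - vx q)) <= a^2 + (2 * K)^2 * ds^2).
  { eapply Rle_trans; [apply (two_mult_le_sum_sqr a)|]. apply Rplus_le_compat_l, sqr_mult_le.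
    eapply Rle_trans; [apply Rabs_triang|]. rewrite Rabs_Ropp. lra. }
  assert (T4 := two_mult3_le (vz l) M a b ltac:(rewrite Rabs_right; lra)).
  assert (T5 : 2 * b * (dr * vx q) <= b^2 + K^2 * dr^2)
    by (eapply Rle_trans; [apply (two_mult_le_sum_sqr b)|]; apply Rplus_le_compat_l, sqr_mult_le, Hqx).
  assert (T7 := two_mult3_le (- vz p) K a b ltac:(rewrite Rabs_Ropp; lra)).
  assert (T8 := two_mult3_le (- vx q) K b c ltac:(rewrite Rabs_Ropp; lra)).
  assert (T10 : 2 * c * (db * (- vz q)) <= c^2 + K^2 * db^2).
  { eapply Rle_trans; [apply (two_mult_le_sum_sqr c)|].
    apply Rplus_le_compat_l, sqr_mult_le. rewrite Rabs_Ropp. exact Hqz. }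
  assert (T11 := two_mult3_le (vy p) K c a Hpy).
  assert (T12 := two_mult3_le (vx q) K c b Hqx).
  pose proof (pow2_ge_0 a). pose proof (pow2_ge_0 b). pose proof (pow2_ge_0 c).
  pose proof (pow2_ge_0 ds). pose proof (pow2_ge_0 db). pose proof (pow2_ge_0 dr).
  pose proof (pow2_ge_0 K).
  assert (0 <= vx l * a^2) by (apply Rmult_le_pos; lra).
  assert (0 <= vy l * c^2) by (apply Rmult_le_pos; lra).
  replace ((2 * K)^2 * ds^2) with (4 * K^2 * ds^2) in T3 by ring.
  nra.
Qed.

Lemma is_derive_sq_dist (p q : R -> vec) t a1 a2 a3 b1 b2 b3 :
  is_derive (fun s => vx (p s)) t a1 -> is_derive (fun s => vy (p s)) t a2 ->
  is_derive (fun s => vz (p s)) t a3 ->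
  is_derive (fun s => vx (q s)) t b1 -> is_derive (fun s => vy (q s)) t b2 ->
  is_derive (fun s => vz (q s)) t b3 ->
  is_derive (fun s => sq_dist (p s) (q s)) t
    (2 * (vx (p t) - vx (q t)) * (a1 - b1) + 2 * (vy (p t) - vy (q t)) * (a2 - b2)
     + 2 * (vz (p t) - vz (q t)) * (a3 - b3)).
Proof.
  assert (Hsq : forall (f g : R -> R) a b, derivable_pt_lim f t a -> derivable_pt_lim g t b ->
            derivable_pt_lim (fun s => (f s - g s)^2) t (2 * (f t - g t) * (a - b))).
  { intros f g a b Ha Hb. replace (2 * (f t - g t) * (a - b)) with (INR 2 * (f t - g t)^1 * (a - b))
      by (simpl; ring).
    apply (derivable_pt_lim_comp (fun s => f s - g s) (fun y => y^2));
      [apply (derivable_pt_lim_minus f g); assumption|apply derivable_pt_lim_pow]. }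
  intros. apply is_derive_Reals in H, H0, H1, H2, H3, H4. apply is_derive_Reals. unfold sq_dist.
  apply (derivable_pt_lim_plus (fun s => (vx (p s) - vx (q s))^2 + (vy (p s) - vy (q s))^2)
           (fun s => (vz (p s) - vz (q s))^2));
    [apply (derivable_pt_lim_plus (fun s => (vx (p s) - vx (q s))^2) (fun s => (vy (p s) - vy (q s))^2))|];
    apply Hsq; assumption.
Qed.

Lemma continuity_pt_sq_dist (p q : R -> vec) t : continuity_pt3 p t -> continuity_pt3 q t ->
  continuity_pt (fun s => sq_dist (p s) (q s)) t.
Proof.
  intros [Hp1 [Hp2 Hp3]] [Hq1 [Hq2 Hq3]]. unfold sq_dist.
  apply (continuity_pt_plus (fun s => (vx (p s) - vx (q s))^2 + (vy (p s) - vy (q s))^2)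
           (fun s => (vz (p s) - vz (q s))^2));
    [apply (continuity_pt_plus (fun s => (vx (p s) - vx (q s))^2) (fun s => (vy (p s) - vy (q s))^2))|];
    apply continuity_pt_sqr_comp, continuity_pt_minus; assumption.
Qed.

Definition lorenz_sep_factor (K M t : R) :=
  4 * K^2 / lorenz_sep_rate K M * (exp (lorenz_sep_rate K M * t) - 1).

Lemma lorenz_sep_factor_nonneg K M t : 0 <= K -> 0 <= M -> 0 <= t -> 0 <= lorenz_sep_factor K M t.
Proof.
  intros HK HM Ht. unfold lorenz_sep_factor, lorenz_sep_rate.
  apply Rmult_le_pos; [apply Rdiv_le_0_compat; [pose proof (pow2_ge_0 K); lra|lra]|].
  assert (exp 0 <= exp ((2 * M + 4 * K + 3) * t)).
  { assert (Hx : 0 <= (2 * M + 4 * K + 3) * t) by (apply Rmult_le_pos; lra).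
    destruct Hx as [Hx|Hx]; [left; apply exp_increasing, Hx|rewrite <- Hx; right; reflexivity]. }
  rewrite exp_0 in H. lra.
Qed.

Lemma lorenz_solutions_close l mu u v K M : 0 <= K ->
  0 <= vx l <= M -> 0 <= vy l <= M -> 0 <= vz l <= M ->
  lorenz_solution l u -> lorenz_solution mu v -> u 0 = v 0 ->
  (forall t, 0 <= t -> in_cube K (u t) /\ in_cube K (v t)) ->
  forall t, 0 <= t -> sq_dist (u t) (v t) <= lorenz_sep_factor K M t * sq_dist l mu.
Proof.
  intros HK Hs Hb Hr Hu Hv H0 Hbd t Ht.
  destruct (lorenz_solution_extend_left l u Hu) as [Du Cu].
  destruct (lorenz_solution_extend_left mu v Hv) as [Dv Cv].
  rewrite <- (extend_left_eq u t Ht), <- (extend_left_eq v t Ht).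
  replace (lorenz_sep_factor K M t * sq_dist l mu) with
    (4 * K^2 * sq_dist l mu / lorenz_sep_rate K M * (exp (lorenz_sep_rate K M * t) - 1))
    by (unfold lorenz_sep_factor, lorenz_sep_rate; field; lra).
  set (u' := extend_left u). set (v' := extend_left v).
  apply (gronwall_from_zero (fun s => sq_dist (u' s) (v' s))
     (fun s => 2 * (vx (u' s) - vx (v' s)) * (lorenz_x l (u' s) - lorenz_x mu (v' s))
             + 2 * (vy (u' s) - vy (v' s)) * (lorenz_y l (u' s) - lorenz_y mu (v' s))
             + 2 * (vz (u' s) - vz (v' s)) * (lorenz_z l (u' s) - lorenz_z mu (v' s))));
    [unfold lorenz_sep_rate; lra| | | | |exact Ht].
  - pose proof (sq_dist_nonneg l mu). pose proof (pow2_ge_0 K). nra.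
  - intros s Hs'. split.
    + destruct (Du s Hs') as [a1 [a2 a3]]. destruct (Dv s Hs') as [b1 [b2 b3]].
      apply is_derive_sq_dist; assumption.
    + unfold u', v'. rewrite !extend_left_eq by lra. destruct (Hbd s ltac:(lra)) as [Hus Hvs].
      apply lorenz_sep_deriv_bound; assumption.
  - apply continuity_pt_sq_dist; [apply Cu|apply Cv]; lra.
  - unfold u', v'. rewrite !extend_left_eq, H0 by lra. unfold sq_dist. rewrite !Rminus_diag. ring.
Qed.

Definition attractor_radius (m M : R) := lyap_radius m M (absorb_level m M).

Definition orbit_radius (m M : R) (l : vec) :=
  lyap_radius m M (Rmax (absorb_level m M) (lyap_cube_bound l (attractor_radius m M))).

Lemma attractor_in_cube m M l A : 0 < m -> in_box m M l -> posoct l -> is_global_attractor l A ->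
  forall a, A a -> in_cube (attractor_radius m M) a.
Proof.
  intros Hm Hb Hl HA a Ha. apply (coords_le_lyap_radius m M l); [exact Hm|exact Hb|].
  apply (attractor_lyap_bound m M l A); assumption.
Qed.

Lemma attractor_orbits_close m M l mu A u v x t : 0 < m -> in_box m M l -> in_box m M mu ->
  posoct l -> posoct mu -> is_global_attractor mu A -> A x ->
  lorenz_solution mu u -> lorenz_solution l v -> u 0 = x -> v 0 = x -> 0 <= t ->
  sq_dist (u t) (v t) <= lorenz_sep_factor (orbit_radius m M l) M t * (edist mu l)^2.
Proof.
  intros Hm Hbl Hbmu Hl Hmu HA Hx Hu Hv Hu0 Hv0 Ht.
  assert (HmM : m <= M) by (destruct Hbl as [[h1 h2] _]; lra).
  assert (HWb := absorb_level_pos m M Hm HmM).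
  set (W := Rmax (absorb_level m M) (lyap_cube_bound l (attractor_radius m M))).
  assert (HW : absorb_level m M <= W) by apply Rmax_l.
  assert (HxV : lyap mu x <= absorb_level m M) by (apply (attractor_lyap_bound m M mu A); assumption).
  assert (HR1 : 0 <= attractor_radius m M).
  { destruct (attractor_in_cube m M mu A Hm Hbmu Hmu HA x Hx) as [Hc _].
    pose proof (Rabs_pos (vx x)). lra. }
  rewrite edist_pow2. pose proof Hbmu as [[s1 s2] [[b1 b2] [r1 r2]]].
  apply (lorenz_solutions_close mu l u v (orbit_radius m M l) M); try lra; try assumption.
  - unfold orbit_radius, lyap_radius. fold W. assert (0 <= W / m) by (apply Rdiv_le_0_compat; lra). lra.
  - rewrite Hu0, Hv0; reflexivity.
  - intros s Hs. split.
    + apply (lorenz_solution_in_cube m M mu u W); try assumption. rewrite Hu0. lra.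
    + apply (lorenz_solution_in_cube m M l v W); try assumption. rewrite Hv0.
      eapply Rle_trans; [|apply Rmax_r].
      apply lyap_le_cube_bound; [exact Hl|exact HR1|].
      apply (coords_le_lyap_radius m M mu); assumption.
Qed.

(** * The Baire property of the parameter domain *)

Lemma ball_in_posoct c z : posoct c -> edist c z < mincoord c -> posoct z.
Proof.
  intros Hc Hd. destruct (edist_ge_coords c z) as [e1 [e2 e3]]. pose proof (mincoord_le c).
  pose proof (Rle_abs (vx c - vx z)). pose proof (Rle_abs (vy c - vy z)).
  pose proof (Rle_abs (vz c - vz z)). unfold posoct. lra.
Qed.

Lemma nowhere_dense_shrink (N : vec -> Prop) c r : nowhere_dense_in posoct N -> posoct c -> 0 < r ->
  exists c' r', posoct c' /\ 0 < r' /\ r' <= r / 2 /\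
    forall z, edist c' z <= r' -> posoct z /\ edist c z < r /\ ~ N z.
Proof.
  intros HN Hc Hr. destruct (HN c Hc r Hr) as [q [d [Hq [Hd [H1 H2]]]]].
  pose proof (mincoord_pos q Hq).
  pose proof (Rmin_l (d / 2) (Rmin (r / 2) (mincoord q / 2))).
  pose proof (Rmin_r (d / 2) (Rmin (r / 2) (mincoord q / 2))).
  pose proof (Rmin_l (r / 2) (mincoord q / 2)). pose proof (Rmin_r (r / 2) (mincoord q / 2)).
  set (r' := Rmin (d / 2) (Rmin (r / 2) (mincoord q / 2))) in *.
  assert (Hr'0 : 0 < r') by (unfold r'; repeat apply Rmin_glb_lt; lra).
  exists q, r'. split; [exact Hq|]. split; [exact Hr'0|]. split; [lra|].
  intros z Hz. assert (Hzp : posoct z) by (apply (ball_in_posoct q); [exact Hq|lra]).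
  split; [exact Hzp|]. split; [apply H1|apply H2]; (exact Hzp || lra).
Qed.

Lemma INR_le_pow2 n : INR n <= 2 ^ n.
Proof.
  induction n; [simpl; lra|]. rewrite S_INR. simpl.
  assert (1 <= 2^n) by (apply pow_R1_Rle; lra). lra.
Qed.

Lemma exists_nat_gt (x : R) : exists n : nat, x < INR n.
Proof.
  destruct (archimed x) as [H _]. exists (Z.to_nat (up x) + 1)%nat.
  rewrite plus_INR. simpl. destruct (Z_le_gt_dec 0 (up x)) as [h|h].
  - rewrite INR_IZR_INZ, Z2Nat.id by exact h. lra.
  - pose proof (pos_INR (Z.to_nat (up x))). assert (up x <= -1)%Z as h' by lia.
    apply IZR_le in h'. simpl in h'. lra.
Qed.

Lemma geometric_small r0 e : 0 < e -> exists N, forall k, (N <= k)%nat -> r0 / 2 ^ k < e.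
Proof.
  intros He. destruct (exists_nat_gt (r0 / e)) as [N HN]. exists N. intros k Hk.
  assert (0 < 2 ^ k) by (apply pow_lt; lra).
  assert (INR N <= 2 ^ k).
  { eapply Rle_trans; [apply le_INR, Hk|apply INR_le_pow2]. }
  apply Rmult_lt_reg_r with (2 ^ k); [lra|]. unfold Rdiv. rewrite Rmult_assoc, Rinv_l by lra.
  assert (r0 < e * INR N).
  { apply Rmult_lt_reg_r with (/ e); [apply Rinv_0_lt_compat; lra|].
    replace (e * INR N * / e) with (INR N) by (field; lra). exact HN. }
  assert (e * INR N <= e * 2 ^ k) by (apply Rmult_le_compat_l; lra). lra.
Qed.

Lemma edist_cauchy_limit (c : nat -> vec) (r : nat -> R) :
  (forall k j, (k <= j)%nat -> edist (c k) (c j) <= r k) ->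
  (forall e, 0 < e -> exists N, forall k, (N <= k)%nat -> r k < e) ->
  exists q, forall k, edist (c k) q <= r k.
Proof.
  intros Hc Hr.
  assert (Cau : forall pr : vec -> R, (forall a b, Rabs (pr a - pr b) <= edist a b) ->
     exists l, Un_cv (fun k => pr (c k)) l).
  { intros pr Hpr.
    assert (H : ex_lim_seq_cauchy (fun k => pr (c k))).
    { intros e. destruct (Hr e (cond_pos e)) as [N HN]. exists N.
      assert (H : forall a b, (N <= a)%nat -> (a <= b)%nat -> Rabs (pr (c a) - pr (c b)) < e).
      { intros a b Ha Hb. eapply Rle_lt_trans; [apply Hpr|].
        eapply Rle_lt_trans; [apply Hc, Hb|apply HN, Ha]. }
      intros n m Hn Hm. destruct (Nat.le_ge_cases n m).
      - apply H; lia.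
      - rewrite Rabs_minus_sym. apply H; lia. }
    apply ex_lim_seq_cauchy_corr in H. destruct H as [l Hl]. exists l. apply is_lim_seq_Reals, Hl. }
  destruct (Cau vx (fun a b => proj1 (edist_ge_coords a b))) as [lx Hlx].
  destruct (Cau vy (fun a b => proj1 (proj2 (edist_ge_coords a b)))) as [ly Hly].
  destruct (Cau vz (fun a b => proj2 (proj2 (edist_ge_coords a b)))) as [lz Hlz].
  exists (lx, ly, lz). intros k. apply Rnot_lt_le. intros Hlt.
  set (eta := (edist (c k) (lx, ly, lz) - r k) / 4).
  assert (Heta : 0 < eta) by (unfold eta; lra).
  destruct (Hlx eta Heta) as [N1 H1]. destruct (Hly eta Heta) as [N2 H2].
  destruct (Hlz eta Heta) as [N3 H3].
  set (j := (k + N1 + N2 + N3)%nat).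
  specialize (H1 j ltac:(unfold j; lia)). specialize (H2 j ltac:(unfold j; lia)).
  specialize (H3 j ltac:(unfold j; lia)). unfold Rdist in H1, H2, H3.
  assert (edist (c j) (lx, ly, lz) <= 3 * eta)
    by (eapply Rle_trans; [apply edist_le_l1_dist|]; unfold l1_dist; cbn [vx vy vz fst snd]; lra).
  pose proof (Hc k j ltac:(unfold j; lia)).
  pose proof (edist_triangle (c k) (c j) (lx, ly, lz)). unfold eta in *. lra.
Qed.

Lemma nested_balls_avoiding (N : nat -> vec -> Prop) p r0 :
  (forall n, nowhere_dense_in posoct (N n)) -> posoct p -> 0 < r0 ->
  exists (c : nat -> vec) (r : nat -> R), c 0%nat = p /\ r 0%nat = r0 /\
    (forall k, 0 < r k <= r0 / 2 ^ k) /\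
    (forall k z, edist (c (S k)) z <= r (S k) -> posoct z /\ edist (c k) z < r k /\ ~ N k z).
Proof.
  intros HN Hp Hr0.
  set (Good := fun n (s s' : vec * R) => posoct (fst s) /\ 0 < snd s ->
    posoct (fst s') /\ 0 < snd s' /\ snd s' <= snd s / 2 /\
    forall z, edist (fst s') z <= snd s' -> posoct z /\ edist (fst s) z < snd s /\ ~ N n z).
  assert (HGood : forall n s, exists s', Good n s s').
  { intros n [c r]. destruct (classic (posoct c /\ 0 < r)) as [[Hc Hr]|Hn].
    - destruct (nowhere_dense_shrink (N n) c r (HN n) Hc Hr) as [c' [r' H]]. exists (c', r').
      intros _. exact H.
    - exists (c, r). intros H. contradiction. }
  set (step := fun n s => proj1_sig (constructive_indefinite_description _ (HGood n s))).
  assert (Hstep : forall n s, Good n s (step n s))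
    by (intros n s; unfold step; destruct constructive_indefinite_description; assumption).
  set (sq := fix sq (k : nat) : vec * R := match k with O => (p, r0) | S k => step k (sq k) end).
  assert (Inv : forall k, posoct (fst (sq k)) /\ 0 < snd (sq k) /\ snd (sq k) <= r0 / 2 ^ k).
  { induction k as [|k IH].
    - simpl. split; [exact Hp|]. lra.
    - destruct IH as [H1 [H2 H3]]. change (sq (S k)) with (step k (sq k)).
      destruct (Hstep k (sq k) (conj H1 H2)) as [a [b [c _]]].
      split; [exact a|]. split; [exact b|]. simpl pow.
      replace (r0 / (2 * 2 ^ k)) with (r0 / 2 ^ k / 2) by (field; apply pow_nonzero; lra). lra. }
  exists (fun k => fst (sq k)), (fun k => snd (sq k)). split; [reflexivity|]. split; [reflexivity|].
  split; [intros k; apply Inv|].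
  intros k z. destruct (Inv k) as [a [b _]]. apply (Hstep k (sq k) (conj a b)).
Qed.

Lemma baire_posoct (N : nat -> vec -> Prop) : (forall n, nowhere_dense_in posoct (N n)) ->
  forall p, posoct p -> forall eps, 0 < eps ->
    exists q, posoct q /\ (forall n, ~ N n q) /\ edist p q < eps.
Proof.
  intros HN p Hp eps Heps.
  set (r0 := Rmin (eps / 2) (mincoord p / 2)).
  assert (Hr0 : 0 < r0 /\ r0 < eps)
    by (unfold r0; pose proof (mincoord_pos p Hp); pose proof (Rmin_l (eps / 2) (mincoord p / 2));
        split; [apply Rmin_glb_lt|]; lra).
  destruct (nested_balls_avoiding N p r0 HN Hp (proj1 Hr0)) as [c [r [Hc0 [Hr0' [Hr Hball]]]]].
  assert (Nest : forall k j z, (k <= j)%nat -> edist (c j) z <= r j -> edist (c k) z <= r k).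
  { intros k j z Hkj. induction Hkj as [|j Hkj IH]; [tauto|].
    intros Hz. apply IH. left. apply (Hball j z Hz). }
  destruct (edist_cauchy_limit c r) as [q Hq].
  - intros k j Hkj. apply (Nest k j); [exact Hkj|]. rewrite edist_refl. left; apply Hr.
  - intros e He. destruct (geometric_small r0 e He) as [K HK]. exists K. intros k Hk.
    eapply Rle_lt_trans; [apply Hr|apply HK, Hk].
  - exists q. split; [|split].
    + apply (Hball 0%nat q (Hq 1%nat)).
    + intros n. apply (Hball n q (Hq (S n))).
    + pose proof (Hq 0%nat) as H0. rewrite Hc0, Hr0' in H0. lra.
Qed.

(** * Upper semicontinuity of the attractors *)

Lemma in_box_near l0 mu : edist mu l0 < mincoord l0 / 2 ->
  in_box (mincoord l0 / 2) (maxcoord l0 + mincoord l0 / 2) mu.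
Proof.
  intros Hd. destruct (edist_ge_coords mu l0) as [c1 [c2 c3]].
  pose proof (mincoord_le l0). pose proof (maxcoord_ge l0).
  apply Rle_lt_trans with (r3 := mincoord l0 / 2) in c1, c2, c3; try exact Hd.
  apply Rabs_lt_between' in c1, c2, c3. unfold in_box. lra.
Qed.

Lemma edist_lt_of_sq_dist_le Q d e a b : 0 <= Q -> 0 < e -> 0 <= d < 1 -> d < e^2 / (Q + 1) ->
  sq_dist a b <= Q * d^2 -> edist a b < e.
Proof.
  intros HQ He Hd Hde Hab.
  assert (Hd2 : d^2 < e^2 / (Q + 1)) by (simpl; nra).
  assert (HQe : Q * (e^2 / (Q + 1)) < e^2).
  { replace (Q * (e^2 / (Q + 1))) with (e^2 - e^2 / (Q + 1)) by (field; lra).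
    assert (0 < e^2 / (Q + 1)) by (apply Rdiv_lt_0_compat; [apply pow_lt|]; lra). lra. }
  assert (sq_dist a b < e^2) by nra.
  rewrite <- (sqrt_pow2 e) by lra. apply sqrt_lt_1_alt. split; [apply sq_dist_nonneg|assumption].
Qed.

Section Attractors.

Variable Att : vec -> vec -> Prop.
Hypothesis HA : forall l, posoct l -> is_global_attractor l (Att l).

Lemma attractor_upper_semicontinuous l0 : posoct l0 -> forall eps, 0 < eps ->
  exists delta, 0 < delta /\ forall mu, posoct mu -> edist mu l0 < delta ->
    forall a, Att mu a -> exists b, Att l0 b /\ edist a b < eps.
Proof.
  intros Hl0 eps Heps.
  set (m := mincoord l0 / 2). set (M := maxcoord l0 + m).
  assert (Hm : 0 < m) by (pose proof (mincoord_pos l0 Hl0); unfold m; lra).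
  assert (Hbox0 : in_box m M l0) by (unfold M, m; apply in_box_near; rewrite edist_refl; fold m; lra).
  assert (HmM : m <= M) by (destruct Hbox0 as [[h1 h2] _]; lra).
  destruct (HA l0 Hl0) as [_ [_ Hatt]].
  destruct (Hatt _ (bounded3_in_cube (attractor_radius m M)) (eps / 2) ltac:(lra)) as [T HT].
  set (t := Rmax T 0). assert (HtT : T <= t) by apply Rmax_l. assert (Ht0 : 0 <= t) by apply Rmax_r.
  set (Q := lorenz_sep_factor (orbit_radius m M l0) M t).
  assert (HQ : 0 <= Q).
  { apply lorenz_sep_factor_nonneg; try lra. unfold orbit_radius, lyap_radius.
    pose proof (absorb_level_pos m M Hm HmM).
    assert (0 <= Rmax (absorb_level m M) (lyap_cube_bound l0 (attractor_radius m M)) / m)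
      by (apply Rdiv_le_0_compat; [apply Rle_trans with (absorb_level m M); [lra|apply Rmax_l]|lra]).
    lra. }
  assert (Heq : 0 < (eps / 2)^2 / (Q + 1)) by (apply Rdiv_lt_0_compat; [apply pow_lt|]; lra).
  pose proof (Rmin_l m (Rmin 1 ((eps / 2)^2 / (Q + 1)))).
  pose proof (Rmin_r m (Rmin 1 ((eps / 2)^2 / (Q + 1)))).
  pose proof (Rmin_l 1 ((eps / 2)^2 / (Q + 1))). pose proof (Rmin_r 1 ((eps / 2)^2 / (Q + 1))).
  set (delta := Rmin m (Rmin 1 ((eps / 2)^2 / (Q + 1)))) in *.
  exists delta. split; [unfold delta; repeat apply Rmin_glb_lt; lra|]. intros mu Hmu Hdmu a Ha.
  assert (Hboxmu : in_box m M mu) by (unfold M, m; apply in_box_near; fold m; lra).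
  destruct (HA mu Hmu) as [_ [Hinvmu _]].
  destruct (proj1 (Hinvmu t Ht0 a) Ha) as [x [Hx [u [Hu [Hu0 Hut]]]]].
  destruct (lorenz_solution_exists l0 x Hl0) as [v [Hv Hv0]].
  destruct (HT t HtT x (v t) (attractor_in_cube m M mu (Att mu) Hm Hboxmu Hmu (HA mu Hmu) x Hx)
              (ex_intro _ v (conj Hv (conj Hv0 eq_refl)))) as [b [Hb Hvb]].
  exists b. split; [exact Hb|].
  assert (edist a (v t) < eps / 2).
  { apply (edist_lt_of_sq_dist_le Q (edist mu l0)); try lra.
    - split; [apply edist_nonneg|lra].
    - rewrite <- Hut. apply (attractor_orbits_close m M l0 mu (Att mu) u v x); auto. }
  pose proof (edist_triangle a (v t) b). lra.
Qed.

(** * Generic continuity *)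

Lemma hausdorff_dist_lt (A C : vec -> Prop) r eps : r < eps ->
  (forall a, A a -> exists c, C c /\ edist a c < r) ->
  (forall c, C c -> exists a, A a /\ edist c a < r) ->
  Rbar_lt (hausdorff_dist A C) (Finite eps).
Proof.
  assert (Hexcess : forall A C : vec -> Prop, (forall a, A a -> exists c, C c /\ edist a c < r) ->
            Rbar_le (excess A C) (Finite r)).
  { intros A' C' H. unfold excess.
    destruct (Lub_Rbar_correct (fun s => exists a, A' a /\ Finite s = point_set_dist a C')) as [_ Hl].
    apply Hl. intros s [a [Ha Hs]]. destruct (H a Ha) as [c [Hc Hac]]. unfold point_set_dist in Hs.
    destruct (Glb_Rbar_correct (fun s => exists c, C' c /\ s = edist a c)) as [Hg _].
    specialize (Hg (edist a c) (ex_intro _ c (conj Hc eq_refl))). rewrite <- Hs in Hg.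
    simpl in Hg. simpl. lra. }
  intros Hr H1 H2. assert (E1 := Hexcess A C H1). assert (E2 := Hexcess C A H2).
  unfold hausdorff_dist. destruct (Rbar_lt_dec (excess A C) (excess C A));
    eapply Rbar_le_lt_trans; [exact E2| |exact E1|]; simpl; exact Hr.
Qed.

Lemma common_radius (P : nat -> R -> Prop) N :
  (forall i d d', 0 < d' <= d -> P i d -> P i d') ->
  (forall i, (i < N)%nat -> exists d, 0 < d /\ P i d) ->
  exists d, 0 < d /\ forall i, (i < N)%nat -> P i d.
Proof.
  intros Hmono. induction N as [|N IH]; intros H.
  - exists 1. split; [lra|]. intros i Hi. lia.
  - destruct IH as [d1 [Hd1 H1]]; [intros i Hi; apply H; lia|].
    destruct (H N ltac:(lia)) as [d2 [Hd2 H2]].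
    assert (0 < Rmin d1 d2) by (apply Rmin_glb_lt; lra).
    exists (Rmin d1 d2). split; [assumption|]. intros i Hi.
    destruct (Nat.eq_dec i N) as [->|Hne].
    + apply (Hmono N d2); [split; [lra|apply Rmin_r]|exact H2].
    + apply (Hmono i d1); [split; [lra|apply Rmin_l]|apply H1; lia].
Qed.

Lemma common_radius3 (P : nat -> nat -> nat -> R -> Prop) I :
  (forall i1 i2 i3 d d', 0 < d' <= d -> P i1 i2 i3 d -> P i1 i2 i3 d') ->
  (forall i1 i2 i3, exists d, 0 < d /\ P i1 i2 i3 d) ->
  exists d, 0 < d /\ forall i1 i2 i3, (i1 < I)%nat -> (i2 < I)%nat -> (i3 < I)%nat -> P i1 i2 i3 d.
Proof.
  intros Hmono Hex.
  destruct (common_radius (fun i1 d => forall i2 i3, (i2 < I)%nat -> (i3 < I)%nat -> P i1 i2 i3 d) I)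
    as [d [Hd Hdp]].
  - intros i1 d d' Hd H i2 i3 H2 H3. apply (Hmono i1 i2 i3 d d' Hd), H; assumption.
  - intros i1 _.
    destruct (common_radius (fun i2 d => forall i3, (i3 < I)%nat -> P i1 i2 i3 d) I) as [d2 [Hd2 Hd2p]].
    + intros i2 d d' Hd H i3 H3. apply (Hmono i1 i2 i3 d d' Hd), H; assumption.
    + intros i2 _. apply (common_radius (fun i3 d => P i1 i2 i3 d) I); [|intros; apply Hex].
      intros i3 d d' Hd H. apply (Hmono i1 i2 i3 d d' Hd H).
    + exists d2. split; [exact Hd2|]. intros i2 i3 H2 H3. apply Hd2p; assumption.
  - exists d. split; [exact Hd|]. intros i1 i2 i3 H1 H2 H3. apply Hdp; assumption.
Qed.

Definition grid_point (k i1 i2 i3 : nat) : vec :=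
  (INR i1 / INR (S k) - INR k, INR i2 / INR (S k) - INR k, INR i3 / INR (S k) - INR k).

Definition grid_radius (k : nat) := 4 / INR (S k).

Lemma grid_coord (k : nat) (w : R) : 0 <= w + INR k ->
  exists i : nat, INR i <= (w + INR k) * INR (S k) /\
    Rabs (w - (INR i / INR (S k) - INR k)) < 1 / INR (S k).
Proof.
  intros Hw. set (v := (w + INR k) * INR (S k)).
  assert (HS : 0 < INR (S k)) by (apply lt_0_INR; lia).
  assert (Hv : 0 <= v) by (unfold v; apply Rmult_le_pos; lra).
  destruct (base_Int_part v) as [B1 B2].
  assert (Hnn : (0 <= Int_part v)%Z).
  { destruct (Z_le_gt_dec 0 (Int_part v)) as [h|h]; [exact h|].
    assert (h' : (Int_part v <= -1)%Z) by lia. apply IZR_le in h'. simpl in h'. lra. }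
  exists (Z.to_nat (Int_part v)). rewrite INR_IZR_INZ, Z2Nat.id by exact Hnn.
  split; [exact B1|].
  replace (w - (IZR (Int_part v) / INR (S k) - INR k)) with ((v - IZR (Int_part v)) / INR (S k))
    by (unfold v; field; lra).
  rewrite Rabs_right by (apply Rle_ge, Rdiv_le_0_compat; lra).
  unfold Rdiv. apply Rmult_lt_compat_r; [apply Rinv_0_lt_compat|]; lra.
Qed.

Lemma grid_approx k K y I : 0 <= K -> K <= INR k -> (K + INR k) * INR (S k) < INR I ->
  in_cube K y -> exists i1 i2 i3, (i1 < I)%nat /\ (i2 < I)%nat /\ (i3 < I)%nat /\
    edist y (grid_point k i1 i2 i3) < 3 / INR (S k).
Proof.
  intros HK Hk HI [Hx [Hy Hz]].
  assert (HS : 0 < INR (S k)) by (apply lt_0_INR; lia).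
  assert (G : forall w, Rabs w <= K -> exists i, (i < I)%nat /\
                Rabs (w - (INR i / INR (S k) - INR k)) < 1 / INR (S k)).
  { intros w Hw. apply Rabs_le_between in Hw. destruct (grid_coord k w) as [i [Hi1 Hi2]]; [lra|].
    exists i. split; [|exact Hi2]. apply INR_lt. eapply Rle_lt_trans; [exact Hi1|].
    eapply Rle_lt_trans; [|exact HI]. apply Rmult_le_compat_r; lra. }
  destruct (G _ Hx) as [i1 [Hi1 E1]]. destruct (G _ Hy) as [i2 [Hi2 E2]].
  destruct (G _ Hz) as [i3 [Hi3 E3]].
  exists i1, i2, i3. split; [exact Hi1|]. split; [exact Hi2|]. split; [exact Hi3|].
  eapply Rle_lt_trans; [apply edist_le_l1_dist|]. unfold l1_dist, grid_point; cbn [vx vy vz fst snd].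
  replace (3 / INR (S k)) with (1 / INR (S k) + 1 / INR (S k) + 1 / INR (S k)) by (field; lra). lra.
Qed.


(* The distance from [q] to [Att mu] is at most [c]. *)
Definition attractor_within (q : vec) (c : R) (mu : vec) : Prop :=
  posoct mu /\ forall eta, 0 < eta -> exists b, Att mu b /\ edist q b < c + eta.

Definition within_near (q : vec) (c : R) (mu : vec) (d : R) : Prop :=
  forall z, posoct z -> edist mu z < d -> attractor_within q c z.

Definition within_frontier (q : vec) (c : R) (mu : vec) : Prop :=
  attractor_within q c mu /\ ~ (exists d, 0 < d /\ within_near q c mu d).

Lemma attractor_within_closed q c z : posoct z -> ~ attractor_within q c z ->
  exists d, 0 < d /\ forall w, posoct w -> edist z w < d -> ~ attractor_within q c w.
Proof.
  intros Hz HnE.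
  assert (Hex : exists eta, 0 < eta /\ forall b, Att z b -> c + eta <= edist q b).
  { apply NNPP. intros Hn. apply HnE. split; [exact Hz|]. intros eta Heta.
    apply NNPP. intros Hn2. apply Hn. exists eta. split; [exact Heta|]. intros b Hb.
    apply Rnot_lt_le. intros Hlt. apply Hn2. exists b. split; assumption. }
  destruct Hex as [eta [Heta Hb]].
  destruct (attractor_upper_semicontinuous z Hz (eta / 2) ltac:(lra)) as [d [Hd Hu]].
  exists d. split; [exact Hd|]. intros w Hw Hzw [_ HE].
  destruct (HE (eta / 2) ltac:(lra)) as [a [Ha Hqa]].
  rewrite edist_sym in Hzw. destruct (Hu w Hw Hzw a Ha) as [b [Hbz Hab]].
  specialize (Hb b Hbz). pose proof (edist_triangle q a b). lra.
Qed.

Lemma within_frontier_nowhere_dense q c : nowhere_dense_in posoct (within_frontier q c).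
Proof.
  intros p Hp eps Heps.
  destruct (classic (exists z, posoct z /\ edist p z < eps / 2 /\ ~ attractor_within q c z))
    as [[z [Hz [Hpz HnE]]]|Hall].
  - destruct (attractor_within_closed q c z Hz HnE) as [d [Hd Hcl]].
    exists z, (Rmin d (eps / 2)). split; [exact Hz|]. split; [apply Rmin_glb_lt; lra|].
    pose proof (Rmin_l d (eps / 2)). pose proof (Rmin_r d (eps / 2)). split.
    + intros w Hw Hzw. pose proof (edist_triangle p z w). lra.
    + intros w Hw Hzw [HE _]. apply (Hcl w Hw); [lra|exact HE].
  - exists p, (eps / 2). split; [exact Hp|]. split; [lra|]. split; [intros w _ Hw; lra|].
    intros w Hw Hpw [_ Hint]. apply Hint. exists (eps / 2 - edist p w). split; [lra|].
    intros z Hz Hwz. apply NNPP. intros HnE. apply Hall. exists z.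
    pose proof (edist_triangle p w z). split; [exact Hz|split; [lra|exact HnE]].
Qed.

Definition frontier_family (n : nat) : vec -> Prop :=
  let '(k, r) := Cantor.of_nat n in let '(i1, r2) := Cantor.of_nat r in
  let '(i2, i3) := Cantor.of_nat r2 in
  within_frontier (grid_point k i1 i2 i3) (grid_radius k).

Lemma frontier_family_to_nat k i1 i2 i3 :
  frontier_family (Cantor.to_nat (k, Cantor.to_nat (i1, Cantor.to_nat (i2, i3)))) =
  within_frontier (grid_point k i1 i2 i3) (grid_radius k).
Proof. unfold frontier_family. rewrite !Cantor.cancel_of_to. reflexivity. Qed.

Lemma frontier_family_nowhere_dense n : nowhere_dense_in posoct (frontier_family n).
Proof.
  unfold frontier_family. destruct (Cantor.of_nat n) as [k r]. destruct (Cantor.of_nat r) as [i1 r2].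
  destruct (Cantor.of_nat r2) as [i2 i3]. apply within_frontier_nowhere_dense.
Qed.

Lemma attractor_within_persists l k I : posoct l -> (forall n, ~ frontier_family n l) ->
  exists d, 0 < d /\ forall i1 i2 i3, (i1 < I)%nat -> (i2 < I)%nat -> (i3 < I)%nat ->
    attractor_within (grid_point k i1 i2 i3) (grid_radius k) l ->
    within_near (grid_point k i1 i2 i3) (grid_radius k) l d.
Proof.
  intros Hl Hln. apply (common_radius3 (fun i1 i2 i3 d =>
    attractor_within (grid_point k i1 i2 i3) (grid_radius k) l ->
    within_near (grid_point k i1 i2 i3) (grid_radius k) l d)).
  - intros i1 i2 i3 d d' Hd HP HE z Hz Hlz. apply HP; [exact HE|exact Hz|lra].
  - intros i1 i2 i3.
    destruct (classic (attractor_within (grid_point k i1 i2 i3) (grid_radius k) l)) as [HE|HnE].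
    + assert (Hnot := Hln (Cantor.to_nat (k, Cantor.to_nat (i1, Cantor.to_nat (i2, i3))))).
      rewrite frontier_family_to_nat in Hnot.
      destruct (classic (exists d, 0 < d /\ within_near (grid_point k i1 i2 i3) (grid_radius k) l d))
        as [[d [Hd Hz]]|Hno].
      * exists d. split; [exact Hd|]. intros _. exact Hz.
      * exfalso. apply Hnot. split; assumption.
    + exists 1. split; [lra|]. intros HE. contradiction.
Qed.

Lemma attractor_lower_semicontinuous l : posoct l -> (forall n, ~ frontier_family n l) ->
  forall eps, 0 < eps -> exists delta, 0 < delta /\ forall mu, posoct mu -> edist mu l < delta ->
    forall y, Att l y -> exists a, Att mu a /\ edist y a < eps.
Proof.
  intros Hl Hln eps Heps.
  destruct (HA l Hl) as [[_ [K0 HK0]] _].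
  set (K := Rmax K0 0). assert (HK : 0 <= K) by apply Rmax_r.
  assert (Hcube : forall y, Att l y -> in_cube K y)
    by (intros y Hy; apply in_cube_of_edist_0; eapply Rle_trans; [apply HK0, Hy|apply Rmax_l]).
  (* Grid error [3/(k+1)], radius [4/(k+1)] and slack [1/(k+1)] add up to [8/(k+1) < eps]. *)
  destruct (exists_nat_gt (K + 8 / eps)) as [k Hk].
  assert (H8 : 0 < 8 / eps) by (apply Rdiv_lt_0_compat; lra).
  assert (HS : 0 < INR (S k)) by (apply lt_0_INR; lia).
  assert (Hmesh : 8 / INR (S k) < eps).
  { rewrite S_INR in *. apply Rmult_lt_reg_r with (INR k + 1); [lra|].
    unfold Rdiv. rewrite Rmult_assoc, Rinv_l by lra.
    assert (8 / eps < INR k + 1) by lra.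
    apply Rmult_lt_compat_l with (r := eps) in H; [|lra].
    replace (eps * (8 / eps)) with 8 in H by (field; lra). lra. }
  destruct (exists_nat_gt ((K + INR k) * INR (S k))) as [I HI].
  destruct (attractor_within_persists l k I Hl Hln) as [d [Hd Hpers]].
  exists d. split; [exact Hd|]. intros mu Hmu Hmul y Hy.
  destruct (grid_approx k K y I HK ltac:(lra) HI (Hcube y Hy)) as [i1 [i2 [i3 [H1 [H2 [H3 Hyq]]]]]].
  assert (Hfrac : forall a b, a < b -> a / INR (S k) < b / INR (S k))
    by (intros a b Hab; unfold Rdiv; apply Rmult_lt_compat_r; [apply Rinv_0_lt_compat|]; lra).
  assert (HEl : attractor_within (grid_point k i1 i2 i3) (grid_radius k) l).
  { split; [exact Hl|]. intros eta Heta. exists y. split; [exact Hy|]. rewrite edist_sym.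
    unfold grid_radius. specialize (Hfrac 3 4 ltac:(lra)). lra. }
  destruct (Hpers i1 i2 i3 H1 H2 H3 HEl mu Hmu ltac:(rewrite edist_sym; lra)) as [_ HEm].
  destruct (HEm (1 / INR (S k))) as [a [Ha Hqa]]; [apply Rdiv_lt_0_compat; lra|].
  exists a. split; [exact Ha|]. pose proof (edist_triangle y (grid_point k i1 i2 i3) a).
  unfold grid_radius in Hqa.
  replace (3 / INR (S k) + (4 / INR (S k) + 1 / INR (S k))) with (8 / INR (S k)) in * by (field; lra).
  lra.
Qed.

End Attractors.

Theorem theorem6p2 :
  forall Att : vec -> vec -> Prop,
    (forall l, posoct l -> is_global_attractor l (Att l)) ->
    exists Lstar : vec -> Prop,
      (forall l, Lstar l -> posoct l) /\
      residual_in posoct Lstar /\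
      dense_in posoct Lstar /\
      (forall l, Lstar l ->
         forall eps, 0 < eps -> exists delta, 0 < delta /\
           forall m, posoct m -> edist m l < delta ->
             Rbar_lt (hausdorff_dist (Att m) (Att l)) (Finite eps)).
Proof.
  intros Att HA.
  assert (HN := frontier_family_nowhere_dense Att HA).
  exists (fun l => posoct l /\ forall n, ~ frontier_family Att n l).
  split; [intros l [Hl _]; exact Hl|]. split; [|split].
  - exists (frontier_family Att). split; [exact HN|].
    intros p Hp Hn. apply NNPP. intros Hall. apply Hn. split; [exact Hp|].
    intros n Hnp. apply Hall. exists n. exact Hnp.
  - intros p Hp eps Heps. destruct (baire_posoct _ HN p Hp eps Heps) as [q [Hq [Hqn Hpq]]].
    exists q. split; [split; assumption|exact Hpq].
  - intros l [Hl Hln] eps Heps.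
    destruct (attractor_upper_semicontinuous Att HA l Hl (eps / 2)) as [d1 [Hd1 Hup]]; [lra|].
    destruct (attractor_lower_semicontinuous Att HA l Hl Hln (eps / 2)) as [d2 [Hd2 Hlow]]; [lra|].
    exists (Rmin d1 d2). split; [apply Rmin_glb_lt; lra|]. intros m Hm Hml.
    pose proof (Rmin_l d1 d2). pose proof (Rmin_r d1 d2).
    apply (hausdorff_dist_lt _ _ (eps / 2)); [lra| |].
    + intros a Ha. apply (Hup m Hm); [lra|exact Ha].
    + intros y Hy. apply (Hlow m Hm); [lra|exact Hy].
Qed.
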